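(* Let $M,N$ be integers with $N\ge0$, and let $\phi\in\mathcal{D}_N^M$ be a refinable function with $\widehat\phi(0)\ne0$. Then there exist complex numbers $h_k$, $k=0,\dots,p^{N+1}-1$, with $\phi(x)=\sum_{k=0}^{p^{N+1}-1}h_k\phi\big(\frac{x}{p}-\frac{k}{p^{N+1}}\big)$ for all $x\in\mathbb{Q}_p$, and for $m_0(\xi)=\frac1p\sum_{k=0}^{p^{N+1}-1}h_k\chi_p(k\xi)$ one has $$\widehat\phi(\xi)=\widehat\phi(0)\prod_{j=0}^{\infty}m_0\Big(\frac{\xi}{p^{N-j}}\Big)\qquad\text{for all }\xi\in\mathbb{Q}_p .$$
   Context: $p$ is a prime, $\mathbb{Q}_p$ the field of $p$-adic numbers with norm $|\cdot|_p$. The fractional part of $x=p^{\gamma}\sum_{j\ge0}x_jp^j$ ($x_j\in\{0,\dots,p-1\}$, $x_0\ne0$) is $\{x\}_p=p^{\gamma}\sum_{j=0}^{-\gamma-1}x_jp^j$, $\{0\}_p=0$; $\chi_p(x)=e^{2\pi i\{x\}_p}$; $I_p=\{a:\{a\}_p=a\}$; $B_\gamma(a)=\{x:|x-a|_p\le p^\gamma\}$. $dx$ is Haar measure with $B_0(0)$ of measure 1, and $\widehat f(\xi)=\int\chi_p(\xi x)f(x)\,dx$. A test function is a locally constant compactly supported complex function on $\mathbb{Q}_p$ (locally constant: for each $x$ there is $l\in\mathbb{Z}$ with $f(x+y)=f(x)$ for all $y\in B_l(0)$). $\mathcal{D}_N^M$ denotes the set of test functions $\phi$ that are $p^M$-periodic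 ($\phi(x+p^M)=\phi(x)$ for all $x$) and supported in $B_N(0)$; equivalently, locally constant $\phi$ with $\operatorname{supp}\phi\subset B_N(0)$ and $\operatorname{supp}\widehat\phi\subset B_M(0)$. A function $\phi\in L^2(\mathbb{Q}_p)$ is refinable if $\phi(x)=\sum_{a\in I_p}\alpha_a\phi(p^{-1}x-a)$ for some complex $\alpha_a$ (convergence in $L^2$). *)

From Stdlib Require Import Reals ZArith List Znumtheory Classical ClassicalEpsilon.
From Coquelicot Require Import Coquelicot.
Open Scope R_scope.

(* ---------- p-adic numbers as digit expansions ----------
   x = sum_{j in Z} d_j p^j, digits 0 <= d_j < p, d_j = 0 for j << 0. *)

Definition is_digits (p : positive) (d : Z -> Z) : Prop :=
  (forall j, (0 <= d j < Zpos p)%Z) /\ exists L : Z, forall j, (j < L)%Z -> d j = 0%Z.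

Definition Qp (p : positive) : Type := {d : Z -> Z | is_digits p d}.

Definition digit {p} (x : Qp p) (j : Z) : Z := proj1_sig x j.

Lemma zero_is_digits (p : positive) : is_digits p (fun _ => 0%Z).
Proof.
split; [intros j; split; [apply Z.le_refl | reflexivity] | exists 0%Z; reflexivity].
Qed.

Definition zeroQp (p : positive) : Qp p := exist _ (fun _ => 0%Z) (zero_is_digits p).

Definition pw (p : positive) (e : Z) : R := powerRZ (IZR (Zpos p)) e.

Definition zsum (a b : Z) (f : Z -> R) : R :=
  fold_right Rplus 0 (map (fun k => f (a + Z.of_nat k)%Z) (seq 0 (Z.to_nat (b - a)))).

Definition lowb {p} (x : Qp p) : Z :=
  proj1_sig (constructive_indefinite_description _ (proj2 (proj2_sig x))).

Definition trunc {p} (n : Z) (x : Qp p) : R :=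
  zsum (lowb x) n (fun j => IZR (digit x j) * pw p j).

(* digit j of a number congruent to A j modulo p^(j+1) Z_p *)
Definition dig_of (p : positive) (A : Z -> R) (j : Z) : Z :=
  Z.modulo (Int_part (A j / pw p j)) (Zpos p).

Definition mkQp (p : positive) (A : Z -> R) : Qp p :=
  match excluded_middle_informative (is_digits p (dig_of p A)) with
  | left H => exist _ (dig_of p A) H
  | right _ => zeroQp p
  end.

Definition addQp {p} (x y : Qp p) : Qp p :=
  mkQp p (fun j => trunc (j + 1) x + trunc (j + 1) y).
Definition subQp {p} (x y : Qp p) : Qp p :=
  mkQp p (fun j => trunc (j + 1) x - trunc (j + 1) y).
Definition mulQp {p} (x y : Qp p) : Qp p :=
  mkQp p (fun j => trunc (j + 1 - lowb y) x * trunc (j + 1 - lowb x) y).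

Definition ofZp (p : positive) (k e : Z) : Qp p := mkQp p (fun _ => IZR k * pw p e).

Definition normQp {p} (x : Qp p) : R :=
  match excluded_middle_informative
          (exists v, digit x v <> 0%Z /\ forall j, (j < v)%Z -> digit x j = 0%Z) with
  | left H => pw p (- proj1_sig (constructive_indefinite_description _ H))
  | right _ => 0
  end.

Definition ball_p {p} (g : Z) (a x : Qp p) : Prop := normQp (subQp x a) <= pw p g.

Definition fracR {p} (x : Qp p) : R := trunc 0 x.
Definition fracQp {p} (x : Qp p) : Qp p := mkQp p (fun _ => fracR x).

Definition in_Ip {p} (a : Qp p) : Prop := fracQp a = a.

Definition chi {p} (x : Qp p) : C := (cos (2 * PI * fracR x), sin (2 * PI * fracR x)).

Definition locally_const {p} (f : Qp p -> C) : Prop :=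
  forall x, exists l : Z, forall y, ball_p l (zeroQp p) y -> f (addQp x y) = f x.

(* compact support = support contained in some ball B_R(0) *)
Definition test_fun {p} (f : Qp p -> C) : Prop :=
  locally_const f /\ exists R : Z, forall x, f x <> 0%C -> ball_p R (zeroQp p) x.

Definition in_D (p : positive) (N M : Z) (f : Qp p -> C) : Prop :=
  test_fun f /\
  (forall x, f (addQp x (ofZp p 1 M)) = f x) /\
  (forall x, f x <> 0%C -> ball_p N (zeroQp p) x).

(* ---------- Haar integral of test functions ----------
   If f vanishes outside B_R(0) and is constant on cosets of B_l(0), then
   int f dx = p^l * sum over representatives n p^(-R), 0 <= n < p^(R-l). *)
Definition sumC (l : list C) : C := fold_right Cplus 0%C l.

Definition good_pair {p} (f : Qp p -> C) (Rl : Z * Z) : Prop :=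
  (snd Rl <= fst Rl)%Z /\
  (forall x, f x <> 0%C -> ball_p (fst Rl) (zeroQp p) x) /\
  (forall x y, ball_p (snd Rl) y x -> f x = f y).

Definition riemann_sum {p} (f : Qp p -> C) (Rl : Z * Z) : C :=
  (RtoC (pw p (snd Rl)) *
   sumC (map (fun n => f (ofZp p (Z.of_nat n) (- fst Rl)))
             (seq 0 (Z.to_nat (Zpos p ^ (fst Rl - snd Rl))%Z))))%C.

Definition integral {p} (f : Qp p -> C) : C :=
  match excluded_middle_informative (exists Rl, good_pair f Rl) with
  | left H => riemann_sum f (proj1_sig (constructive_indefinite_description _ H))
  | right _ => 0%C
  end.

Definition ft {p} (f : Qp p -> C) (xi : Qp p) : C :=
  integral (fun x => (chi (mulQp xi x) * f x)%C).

Definition l2norm {p} (f : Qp p -> C) : R :=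
  sqrt (Re (integral (fun x => RtoC (Cmod (f x) ^ 2)))).

(* refinable: phi = sum_{a in I_p} alpha_a phi(p^{-1} x - a), the series being
   (unconditionally) convergent in L^2 *)
Definition refinable {p} (phi : Qp p -> C) : Prop :=
  exists alpha : Qp p -> C,
  forall eps : R, 0 < eps ->
  exists F : list (Qp p), NoDup F /\ (forall a, In a F -> in_Ip a) /\
  forall G : list (Qp p), NoDup G -> (forall a, In a G -> in_Ip a) -> incl F G ->
    l2norm (fun x => (phi x - sumC (map (fun a =>
              alpha a * phi (subQp (mulQp (ofZp p 1 (-1)) x) a)) G))%C) < eps.

Definition ncoef (p : positive) (N : Z) : nat := Z.to_nat (Zpos p ^ (N + 1)).

Definition m0 (p : positive) (N : Z) (h : nat -> C) (xi : Qp p) : C :=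
  (RtoC (/ IZR (Zpos p)) *
   sumC (map (fun k => h k * chi (mulQp (ofZp p (Z.of_nat k) 0) xi)) (seq 0 (ncoef p N))))%C.

Definition prodC (n : nat) (f : nat -> C) : C :=
  fold_right Cmult 1%C (map f (seq 0 n)).

(* For [x] in [B_N], [phi (x/p - a)] vanishes unless [a] lies in [B_(N+1)]; the
   elements of [I_p] there are the [p^(N+1)] points [k/p^(N+1)].  Hence on [B_N] the
   [L^2]-convergent refinement series agrees with a fixed finite sum up to errors of arbitrarily
   small [L^2] norm, and since the defect is locally constant at a fixed scale it vanishes: this
   is the refinement equation with [h_k = alpha_(k/p^(N+1))].  The change of variables
   [y = x/p - k/p^(N+1)] in the Fourier integral gives the two-scale relation
   [phi^(xi) = m_0(p^-N xi) phi^(p xi)], and after [n] steps [phi^(p^n xi) = phi^(0)] as soon as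
   [p^n xi B_N] lies in [Z_p], so the partial products are eventually equal to [phi^(xi)].
   Arithmetic in [Q_p] is handled through truncations: [trunc n x] determines [x] modulo
   [p^n Z_p], and sums, products, balls and the character are read off congruences between
   truncations; the Haar integral of a test function is a Riemann sum that does not depend on the
   chosen radius and mesh. *)

From Stdlib Require Import Reals ZArith List Znumtheory.
From Coquelicot Require Import Coquelicot.
From Stdlib Require Import Lia Lra ProofIrrelevance FunctionalExtensionality Classical ClassicalEpsilon.
Open Scope R_scope.

Lemma fold_Rplus_shift l a : fold_right Rplus a l = fold_right Rplus 0 l + a.
Proof. induction l; simpl. ring. rewrite IHl. ring. Qed.

Lemma zsum_low a b f : (b <= a)%Z -> zsum a b f = 0.
Proof. intros H. unfold zsum. replace (Z.to_nat (b - a)) with 0%nat by lia. reflexivity. Qed.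

Lemma zsum_step a b f : (a <= b)%Z -> zsum a (b + 1) f = zsum a b f + f b.
Proof.
  intros H. unfold zsum. replace (Z.to_nat (b + 1 - a)) with (S (Z.to_nat (b - a))) by lia.
  rewrite seq_S, map_app, fold_right_app. simpl. rewrite fold_Rplus_shift.
  rewrite Rplus_0_r. f_equal. f_equal. lia.
Qed.

Lemma Z_ind_from (b : Z) (Q : Z -> Prop) :
  (forall n, (n <= b)%Z -> Q n) -> (forall n, (b <= n)%Z -> Q n -> Q (n + 1)%Z) -> forall n, Q n.
Proof.
  intros H0 HS n. destruct (Z_le_gt_dec n b). auto.
  replace n with (b + Z.of_nat (Z.to_nat (n - b)))%Z by lia.
  generalize (Z.to_nat (n - b)). induction n0.
  - apply H0. lia.
  - replace (b + Z.of_nat (S n0))%Z with ((b + Z.of_nat n0) + 1)%Z by lia. apply HS; auto. lia.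
Qed.

Lemma Int_part_IZR z : Int_part (IZR z) = z.
Proof. symmetry. apply Int_part_spec. lra. Qed.

Lemma Int_part_frac r q : 0 <= r < 1 -> Int_part (r + IZR q) = q.
Proof. intros H. symmetry. apply Int_part_spec. lra. Qed.

Lemma cos_period_Z u z : cos (u + 2 * IZR z * PI) = cos u.
Proof.
  destruct (Z_le_gt_dec 0 z).
  - rewrite <- (Z2Nat.id z) by lia. rewrite <- INR_IZR_INZ. apply cos_period.
  - replace u with ((u + 2 * IZR z * PI) + 2 * INR (Z.to_nat (- z)) * PI) at 2.
    + rewrite cos_period. reflexivity.
    + rewrite INR_IZR_INZ, Z2Nat.id by lia. rewrite opp_IZR. ring.
Qed.

Lemma sin_period_Z u z : sin (u + 2 * IZR z * PI) = sin u.
Proof.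
  destruct (Z_le_gt_dec 0 z).
  - rewrite <- (Z2Nat.id z) by lia. rewrite <- INR_IZR_INZ. apply sin_period.
  - replace u with ((u + 2 * IZR z * PI) + 2 * INR (Z.to_nat (- z)) * PI) at 2.
    + rewrite sin_period. reflexivity.
    + rewrite INR_IZR_INZ, Z2Nat.id by lia. rewrite opp_IZR. ring.
Qed.

Fixpoint csum (n : nat) (F : nat -> C) : C :=
  match n with O => 0%C | S n => (csum n F + F n)%C end.

Lemma sumC_app l1 l2 : sumC (l1 ++ l2) = (sumC l1 + sumC l2)%C.
Proof. induction l1; simpl. ring. rewrite IHl1. ring. Qed.

Lemma sumC_map_seq n F : sumC (map F (seq 0 n)) = csum n F.
Proof.
  induction n. reflexivity. rewrite seq_S, map_app, sumC_app, IHn. simpl. ring.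
Qed.

Lemma csum_ext n (F G : nat -> C) : (forall i, (i < n)%nat -> F i = G i) -> csum n F = csum n G.
Proof. induction n; simpl; intros H. auto. rewrite IHn, H; auto. Qed.

Lemma csum_plus n F G : csum n (fun i => F i + G i)%C = (csum n F + csum n G)%C.
Proof. induction n; simpl. ring. rewrite IHn. ring. Qed.
Lemma csum_scal n c F : csum n (fun i => c * F i)%C = (c * csum n F)%C.
Proof. induction n; simpl. ring. rewrite IHn. ring. Qed.
Lemma csum_zero n : csum n (fun _ => 0%C) = 0%C.
Proof. induction n; simpl. auto. rewrite IHn. ring. Qed.
Lemma csum_const n c : csum n (fun _ => c) = (RtoC (INR n) * c)%C.
Proof. induction n. simpl. rewrite Cmult_0_l. reflexivity.
  cbn [csum]. rewrite IHn, S_INR, RtoC_plus. ring. Qed.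

Lemma csum_add a b F : csum (a + b) F = (csum a F + csum b (fun i => F (a + i)%nat))%C.
Proof.
  induction b; simpl. rewrite Nat.add_0_r. ring.
  rewrite Nat.add_succ_r. simpl. rewrite IHb. ring.
Qed.

Lemma csum_mul a b F : csum (a * b) F = csum a (fun q => csum b (fun r => F (q * b + r)%nat)).
Proof.
  induction a; simpl. auto.
  replace (b + a * b)%nat with (a * b + b)%nat by lia. rewrite csum_add, IHa. reflexivity.
Qed.

Lemma csum_first n (F : nat -> C) : (forall i, (0 < i < S n)%nat -> F i = 0%C) -> csum (S n) F = F 0%nat.
Proof.
  intros H. replace (S n) with (1 + n)%nat by lia. rewrite csum_add. simpl.
  rewrite (csum_ext n _ (fun _ => 0%C)). rewrite csum_zero. ring.
  intros i Hi. apply H. lia.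
Qed.

Lemma csum_rotate (K : nat) (c : Z) (H : Z -> C) : (0 < K)%nat ->
  csum K (fun n => H ((Z.of_nat n + c) mod Z.of_nat K)%Z) = csum K (fun n => H (Z.of_nat n)).
Proof.
  intros HK. set (c' := Z.to_nat (c mod Z.of_nat K)).
  assert (Hc' : (c' < K)%nat).
  { unfold c'. pose proof (Z.mod_pos_bound c (Z.of_nat K) ltac:(lia)). lia. }
  rewrite (csum_ext K _ (fun n => H ((Z.of_nat n + Z.of_nat c') mod Z.of_nat K)%Z)).
  2:{ intros i _. f_equal. unfold c'. rewrite Z2Nat.id by (apply Z.mod_pos_bound; lia).
      rewrite Zplus_mod_idemp_r. reflexivity. }
  assert (E1 : forall G : nat -> C, csum K G = (csum (K - c') G + csum c' (fun i => G (K - c' + i)%nat))%C).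
  { intros G. rewrite <- csum_add. f_equal. lia. }
  assert (E2 : forall G : nat -> C, csum K G = (csum c' G + csum (K - c') (fun i => G (c' + i)%nat))%C).
  { intros G. rewrite <- csum_add. f_equal. lia. }
  rewrite E1, (E2 (fun n => H (Z.of_nat n))). rewrite Cplus_comm. f_equal.
  - apply csum_ext. intros i Hi. f_equal. rewrite Nat2Z.inj_add.
    replace (Z.of_nat (K - c') + Z.of_nat i + Z.of_nat c')%Z with (Z.of_nat i + 1 * Z.of_nat K)%Z by lia.
    rewrite Z_mod_plus_full. apply Z.mod_small. lia.
  - apply csum_ext. intros i Hi. f_equal. rewrite Z.mod_small by lia. lia.
Qed.

Lemma Re_csum_S n (F : nat -> C) : Re (csum (S n) F) = Re (csum n F) + Re (F n).
Proof. reflexivity. Qed.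

Lemma Re_csum_ge0 n (F : nat -> C) : (forall j, (j < n)%nat -> 0 <= Re (F j)) -> 0 <= Re (csum n F).
Proof.
  induction n; intros H. simpl. lra. rewrite Re_csum_S.
  pose proof (H n ltac:(lia)). assert (0 <= Re (csum n F)) by (apply IHn; intros; apply H; lia). lra.
Qed.

Lemma Re_csum_ge_term n (F : nat -> C) i : (forall j, (j < n)%nat -> 0 <= Re (F j)) -> (i < n)%nat ->
  Re (F i) <= Re (csum n F).
Proof.
  induction n; intros H Hi. lia. rewrite Re_csum_S.
  assert (0 <= Re (csum n F)) by (apply Re_csum_ge0; intros; apply H; lia).
  destruct (Nat.eq_dec i n). subst. lra.
  pose proof (H n ltac:(lia)). pose proof (IHn ltac:(intros; apply H; lia) ltac:(lia)). lra.
Qed.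

Lemma sumC_map_eq0 {A : Type} (f : A -> C) (L : list A) : (forall a, In a L -> f a = 0%C) -> sumC (map f L) = 0%C.
Proof.
  induction L; simpl; intros H. auto. rewrite H, IHL. ring. intros; apply H; auto. auto.
Qed.

Lemma sumC_map_scal {A : Type} (c : C) (f : A -> C) (L : list A) :
  (c * sumC (map f L))%C = sumC (map (fun k => c * f k) L)%C.
Proof. induction L; simpl. ring. rewrite <- IHL. ring. Qed.

Lemma prodC_S n f : prodC (S n) f = (prodC n f * f n)%C.
Proof.
  unfold prodC. rewrite seq_S, map_app, fold_right_app. simpl.
  generalize (map f (seq 0 n)). intros l. induction l; simpl. ring. rewrite IHl. ring.
Qed.

Lemma NoDup_map_seq {A : Type} (f : nat -> A) K :
  (forall i j, (i < K)%nat -> (j < K)%nat -> f i = f j -> i = j) -> NoDup (map f (seq 0 K)).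
Proof.
  induction K; intros H. constructor. rewrite seq_S, map_app. apply NoDup_app.
  - apply IHK. intros; apply H; auto; lia.
  - simpl. constructor. intros []. constructor.
  - intros a Ha [E|[]]. apply in_map_iff in Ha as [i [Hi1 Hi2]]. apply in_seq in Hi2.
    subst. apply H in E; lia.
Qed.

Lemma Re_RtoC_mult r z : Re (RtoC r * z)%C = r * Re z.
Proof. unfold Cmult, RtoC, Re. simpl. ring. Qed.

(** * Truncations and the ring structure of [Q_p] *)

Section Qp_analysis.
Variable p : positive.
Hypothesis hp : (1 < Zpos p)%Z.

Local Notation P := (IZR (Zpos p)).
Lemma p_gt1 : 1 < P.
Proof. apply IZR_lt. exact hp. Qed.
Lemma p_neq0 : P <> 0.
Proof. pose proof p_gt1. lra. Qed.

Lemma pw_add a b : pw p (a + b) = pw p a * pw p b.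
Proof. unfold pw. apply powerRZ_add. apply p_neq0. Qed.
Lemma pw_pos e : 0 < pw p e.
Proof. unfold pw. apply powerRZ_lt. pose proof p_gt1. lra. Qed.
Lemma pw_0 : pw p 0 = 1.
Proof. reflexivity. Qed.
Lemma pw_1 : pw p 1 = P.
Proof. unfold pw. simpl. ring. Qed.
Lemma pw_nat e : (0 <= e)%Z -> pw p e = IZR (Zpos p ^ e).
Proof.
  intros He. destruct e as [|e|e]; try lia.
  - reflexivity.
  - unfold pw. rewrite <- Zpower_pos_powerRZ. reflexivity.
Qed.
Lemma pw_opp e : pw p (- e) = / pw p e.
Proof.
  apply (Rmult_eq_reg_l (pw p e)); [|pose proof (pw_pos e); lra].
  rewrite <- pw_add. rewrite Rinv_r by (pose proof (pw_pos e); lra).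
  replace (e + - e)%Z with 0%Z by lia. reflexivity.
Qed.
Lemma pw_ge1 e : (0 <= e)%Z -> 1 <= pw p e.
Proof.
  intros He. rewrite pw_nat by lia. apply IZR_le.
  assert (0 < Zpos p ^ e)%Z by (apply Z.pow_pos_nonneg; lia). lia.
Qed.
Lemma pw_gt1 e : (0 < e)%Z -> P <= pw p e.
Proof.
  intros He. replace e with (1 + (e - 1))%Z by lia. rewrite pw_add, pw_1.
  pose proof (pw_ge1 (e-1) ltac:(lia)). pose proof p_gt1. nra.
Qed.
Lemma pw_lt a b : (a < b)%Z -> pw p a < pw p b.
Proof.
  intros H. replace b with (a + (b - a))%Z by lia. rewrite pw_add.
  pose proof (pw_gt1 (b - a) ltac:(lia)). pose proof (pw_pos a). pose proof p_gt1. nra.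
Qed.
Lemma pw_le a b : (a <= b)%Z -> pw p a <= pw p b.
Proof. intros H. destruct (Z.eq_dec a b). subst; lra. left; apply pw_lt; lia. Qed.
Lemma pw_le_inv a b : pw p a <= pw p b -> (a <= b)%Z.
Proof. intros H. destruct (Z_le_gt_dec a b); auto. pose proof (pw_lt b a ltac:(lia)). lra. Qed.

Definition in_pZ (k : Z) (r : R) : Prop := exists z : Z, r = IZR z * pw p k.
Definition cong (k : Z) (u v : R) : Prop := in_pZ k (u - v).

Lemma in_pZ_0 k : in_pZ k 0.
Proof. exists 0%Z. ring. Qed.
Lemma in_pZ_add k u v : in_pZ k u -> in_pZ k v -> in_pZ k (u + v).
Proof. intros [a Ha] [b Hb]. exists (a + b)%Z. subst. rewrite plus_IZR. ring. Qed.
Lemma in_pZ_opp k u : in_pZ k u -> in_pZ k (- u).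
Proof. intros [a Ha]. exists (- a)%Z. subst. rewrite opp_IZR. ring. Qed.
Lemma in_pZ_sub k u v : in_pZ k u -> in_pZ k v -> in_pZ k (u - v).
Proof. intros. unfold Rminus. apply in_pZ_add; auto. apply in_pZ_opp; auto. Qed.
Lemma in_pZ_mul a b u v : in_pZ a u -> in_pZ b v -> in_pZ (a + b) (u * v).
Proof. intros [x Hx] [y Hy]. exists (x * y)%Z. subst. rewrite mult_IZR, pw_add. ring. Qed.
Lemma in_pZ_weak m k r : (m <= k)%Z -> in_pZ k r -> in_pZ m r.
Proof.
  intros H [z Hz]. exists (z * Zpos p ^ (k - m))%Z. subst.
  rewrite mult_IZR, <- pw_nat by lia.
  replace k with (m + (k - m))%Z at 1 by lia. rewrite pw_add. ring.
Qed.
Lemma in_pZ_pw e : in_pZ e (pw p e).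
Proof. exists 1%Z. ring. Qed.
Lemma in_pZ_zpw z e : in_pZ e (IZR z * pw p e).
Proof. exists z. ring. Qed.

Lemma cong_refl k u : cong k u u.
Proof. unfold cong. replace (u - u) with 0 by ring. apply in_pZ_0. Qed.
Lemma cong_sym k u v : cong k u v -> cong k v u.
Proof. unfold cong. intros H. replace (v - u) with (- (u - v)) by ring. apply in_pZ_opp; auto. Qed.
Lemma cong_trans k u v w : cong k u v -> cong k v w -> cong k u w.
Proof. unfold cong. intros. replace (u - w) with ((u - v) + (v - w)) by ring. apply in_pZ_add; auto. Qed.
Lemma cong_add k u v u' v' : cong k u v -> cong k u' v' -> cong k (u + u') (v + v').
Proof. unfold cong. intros. replace (u + u' - (v + v')) with ((u - v) + (u' - v')) by ring. apply in_pZ_add; auto. Qed.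
Lemma cong_sub k u v u' v' : cong k u v -> cong k u' v' -> cong k (u - u') (v - v').
Proof. unfold cong. intros. replace (u - u' - (v - v')) with ((u - v) - (u' - v')) by ring. apply in_pZ_sub; auto. Qed.
Lemma cong_weak m k u v : (m <= k)%Z -> cong k u v -> cong m u v.
Proof. unfold cong. intros. eapply in_pZ_weak; eauto. Qed.
Lemma cong_eqR k u v : u = v -> cong k u v.
Proof. intros ->. apply cong_refl. Qed.
Lemma cong_in_pZ k u v : cong k u v -> in_pZ k v -> in_pZ k u.
Proof. unfold cong. intros H1 H2. replace u with ((u - v) + v) by ring. apply in_pZ_add; auto. Qed.

Lemma cong_eq k u v : 0 <= u < pw p k -> 0 <= v < pw p k -> cong k u v -> u = v.
Proof.
  intros Hu Hv [z Hz].
  assert (IZR z < 1 /\ -1 < IZR z) as [H1 H2].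
  { pose proof (pw_pos k). split.
    - apply (Rmult_lt_reg_r (pw p k)); auto. nra.
    - apply (Rmult_lt_reg_r (pw p k)); auto. nra. }
  apply lt_IZR in H1. replace (-1) with (IZR (-1)) in H2 by reflexivity. apply lt_IZR in H2.
  assert (z = 0%Z) by lia. subst. lra.
Qed.

Lemma lowb_spec (x : Qp p) j : (j < lowb x)%Z -> digit x j = 0%Z.
Proof.
  unfold lowb. destruct (constructive_indefinite_description _ _) as [L HL]. simpl. apply HL.
Qed.
Lemma digit_range (x : Qp p) j : (0 <= digit x j < Zpos p)%Z.
Proof. unfold digit. destruct (proj2_sig x) as [Hd _]. apply Hd. Qed.

Lemma trunc_low (x : Qp p) n : (n <= lowb x)%Z -> trunc n x = 0.
Proof. intros. unfold trunc. apply zsum_low. auto. Qed.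

Lemma trunc_succ (x : Qp p) n : trunc (n + 1) x = trunc n x + IZR (digit x n) * pw p n.
Proof.
  unfold trunc. destruct (Z_le_gt_dec (lowb x) n).
  - rewrite zsum_step; auto.
  - rewrite !zsum_low by lia. rewrite lowb_spec by lia. simpl. ring.
Qed.

Lemma trunc_range (x : Qp p) n : 0 <= trunc n x < pw p n.
Proof.
  revert n. apply (Z_ind_from (lowb x)).
  - intros. rewrite trunc_low by auto. split. lra. apply pw_pos.
  - intros n _ [H1 H2]. rewrite trunc_succ. pose proof (digit_range x n) as [D1 D2].
    apply IZR_le in D1. assert (IZR (digit x n) <= P - 1).
    { rewrite <- (minus_IZR _ 1). apply IZR_le. lia. }
    rewrite pw_add, pw_1. pose proof (pw_pos n). split; nra.
Qed.

Lemma trunc_in_pZ (x : Qp p) n k : (k <= lowb x)%Z -> in_pZ k (trunc n x).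
Proof.
  intros Hk. revert n. apply (Z_ind_from (lowb x)).
  - intros. rewrite trunc_low by auto. apply in_pZ_0.
  - intros n Hn IH. rewrite trunc_succ. apply in_pZ_add; auto.
    apply in_pZ_weak with n. lia. apply in_pZ_zpw.
Qed.

Lemma trunc_cong (x : Qp p) m n : (m <= n)%Z -> cong m (trunc n x) (trunc m x).
Proof.
  intros Hmn. revert n Hmn. apply (Z_ind_from m (fun n => (m <= n)%Z -> cong m (trunc n x) (trunc m x))).
  - intros n H1 H2. assert (n = m) by lia. subst. apply cong_refl.
  - intros n Hn IH _. rewrite trunc_succ. unfold cong.
    replace (trunc n x + IZR (digit x n) * pw p n - trunc m x) with ((trunc n x - trunc m x) + IZR (digit x n) * pw p n) by ring.
    apply in_pZ_add. apply IH; lia. apply in_pZ_weak with n. lia. apply in_pZ_zpw.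
Qed.

Lemma trunc_mono (x : Qp p) m n : (m <= n)%Z -> trunc m x <= trunc n x.
Proof.
  intros Hmn. revert n Hmn. apply (Z_ind_from m (fun n => (m <= n)%Z -> trunc m x <= trunc n x)).
  - intros n H1 H2. assert (n = m) by lia. subst. lra.
  - intros n Hn IH _. rewrite trunc_succ. pose proof (digit_range x n) as [D1 _]. apply IZR_le in D1.
    pose proof (pw_pos n). specialize (IH ltac:(lia)). nra.
Qed.

Lemma trunc_eq0_iff (x : Qp p) m : trunc m x = 0 <-> (forall j, (j < m)%Z -> digit x j = 0%Z).
Proof.
  split.
  - intros H j Hj. pose proof (trunc_mono x (j + 1) m ltac:(lia)). rewrite trunc_succ in H0.
    pose proof (trunc_range x j) as [R1 _]. pose proof (digit_range x j) as [D1 _].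
    pose proof (pw_pos j). destruct (Z.eq_dec (digit x j) 0); auto.
    assert (1 <= IZR (digit x j)) by (apply IZR_le; lia). nra.
  - intros H. revert m H. apply (Z_ind_from (lowb x) (fun m => (forall j, (j < m)%Z -> digit x j = 0%Z) -> trunc m x = 0)).
    + intros. apply trunc_low; auto.
    + intros n _ IH H. rewrite trunc_succ. rewrite IH by (intros; apply H; lia). rewrite H by lia. simpl. ring.
Qed.

Lemma digit_trunc (x : Qp p) n : IZR (digit x n) = (trunc (n + 1) x - trunc n x) / pw p n.
Proof. rewrite trunc_succ. field. pose proof (pw_pos n). lra. Qed.

Lemma Qp_eq_trunc (x y : Qp p) : (forall n, trunc n x = trunc n y) -> x = y.
Proof.
  intros H. assert (Hd : forall j, digit x j = digit y j).
  { intros j. apply eq_IZR. rewrite !digit_trunc, !H. reflexivity. }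
  destruct x as [dx Hx], y as [dy Hy]. unfold digit in Hd. simpl in Hd.
  assert (dx = dy) by (apply functional_extensionality; auto). subst.
  f_equal. apply proof_irrelevance.
Qed.

Lemma Qp_eq_cong (x y : Qp p) : (forall n, cong n (trunc n x) (trunc n y)) -> x = y.
Proof. intros H. apply Qp_eq_trunc. intros n. apply (cong_eq n); auto; apply trunc_range. Qed.

Definition coherent (A : Z -> R) (K : Z) : Prop :=
  (forall j, in_pZ K (A j)) /\ (forall j, cong (j + 1) (A (j + 1)%Z) (A j)).

Lemma IZR_mult_pw_div z K j : (j < K)%Z ->
  IZR z * pw p K / pw p j = IZR (z * Zpos p ^ (K - j - 1) * Zpos p).
Proof.
  intros H. rewrite !mult_IZR, <- pw_nat by lia. rewrite <- pw_1.
  replace (pw p K) with (pw p (K - j - 1) * pw p 1 * pw p j) by (rewrite <- !pw_add; f_equal; lia).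
  field. pose proof (pw_pos j); lra.
Qed.

Lemma mkQp_digits A K : coherent A K -> is_digits p (dig_of p A).
Proof.
  intros [H1 H2]. split.
  - intros j. unfold dig_of. apply Z.mod_pos_bound. lia.
  - exists K. intros j Hj. unfold dig_of. destruct (H1 j) as [z Hz]. rewrite Hz.
    rewrite (IZR_mult_pw_div z K j) by lia. rewrite Int_part_IZR. apply Z_mod_mult.
Qed.

Lemma digit_mkQp A K : coherent A K -> forall j, digit (mkQp p A) j = dig_of p A j.
Proof.
  intros HA j. unfold mkQp. destruct (excluded_middle_informative _) as [H|H].
  - reflexivity.
  - exfalso. apply H. eapply mkQp_digits; eauto.
Qed.

Lemma trunc_mkQp A K : coherent A K -> forall n, cong n (trunc n (mkQp p A)) (A (n - 1)%Z).
Proof.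
  intros HA. pose proof (digit_mkQp A K HA) as Hd. destruct HA as [H1 H2].
  apply (Z_ind_from K (fun n => cong n (trunc n (mkQp p A)) (A (n - 1)%Z))).
  - intros n Hn. rewrite (proj2 (trunc_eq0_iff _ n)).
    + unfold cong. replace (0 - A (n - 1)%Z) with (- A (n - 1)%Z) by ring. apply in_pZ_opp.
      apply in_pZ_weak with K; auto.
    + intros j Hj. rewrite Hd. unfold dig_of. destruct (H1 j) as [z Hz]. rewrite Hz.
      rewrite (IZR_mult_pw_div z K j) by lia. rewrite Int_part_IZR. apply Z_mod_mult.
  - intros n Hn IH. replace (n + 1 - 1)%Z with n by lia.
    assert (Hc : cong n (A n) (trunc n (mkQp p A))).
    { apply cong_trans with (A (n - 1)%Z). pose proof (H2 (n - 1)%Z) as E.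
      replace (n - 1 + 1)%Z with n in E by lia. exact E. apply cong_sym; auto. }
    destruct Hc as [q Hq].
    rewrite trunc_succ, Hd. unfold dig_of.
    replace (A n / pw p n) with (trunc n (mkQp p A) / pw p n + IZR q).
    2:{ apply (Rmult_eq_reg_r (pw p n)). 2: pose proof (pw_pos n); lra.
        unfold Rdiv. rewrite Rmult_plus_distr_r, !Rmult_assoc, Rinv_l by (pose proof (pw_pos n); lra). lra. }
    rewrite Int_part_frac.
    2:{ pose proof (trunc_range (mkQp p A) n). pose proof (pw_pos n).
        split. apply Rmult_le_pos. lra. left; apply Rinv_0_lt_compat; lra.
        apply (Rmult_lt_reg_r (pw p n)). lra. unfold Rdiv. rewrite Rmult_assoc, Rinv_l; lra. }
    exists (- (q / Zpos p))%Z. rewrite (Z.mod_eq q (Zpos p)) by lia.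
    rewrite opp_IZR, minus_IZR, mult_IZR, pw_add, pw_1. nra.
Qed.

(* [val_ge x K] says [|x|_p <= p^-K]. *)
Definition val_ge (x : Qp p) (K : Z) : Prop := forall a, in_pZ K (trunc a x).
Lemma val_ge_lowb x : val_ge x (lowb x).
Proof. intros a. apply trunc_in_pZ. lia. Qed.

Lemma trunc_addQp (x y : Qp p) n : cong n (trunc n (addQp x y)) (trunc n x + trunc n y).
Proof.
  assert (Hr : coherent (fun j => trunc (j + 1) x + trunc (j + 1) y) (Z.min (lowb x) (lowb y))).
  { split. - intros j. apply in_pZ_add; apply trunc_in_pZ; lia.
    - intros j. apply cong_add; apply trunc_cong; lia. }
  pose proof (trunc_mkQp _ _ Hr n) as H. cbv beta in H. replace (n - 1 + 1)%Z with n in H by lia. exact H.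
Qed.

Lemma trunc_subQp (x y : Qp p) n : cong n (trunc n (subQp x y)) (trunc n x - trunc n y).
Proof.
  assert (Hr : coherent (fun j => trunc (j + 1) x - trunc (j + 1) y) (Z.min (lowb x) (lowb y))).
  { split. - intros j. apply in_pZ_sub; apply trunc_in_pZ; lia.
    - intros j. apply cong_sub; apply trunc_cong; lia. }
  pose proof (trunc_mkQp _ _ Hr n) as H. cbv beta in H. replace (n - 1 + 1)%Z with n in H by lia. exact H.
Qed.

Lemma trunc_mulQp_lowb (x y : Qp p) n :
  cong n (trunc n (mulQp x y)) (trunc (n - lowb y) x * trunc (n - lowb x) y).
Proof.
  assert (Hr : coherent (fun j => trunc (j + 1 - lowb y) x * trunc (j + 1 - lowb x) y) (lowb x + lowb y)).
  2:{ pose proof (trunc_mkQp _ _ Hr n) as H. cbv beta in H.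
  replace (n - 1 + 1 - lowb y)%Z with (n - lowb y)%Z in H by lia.
  replace (n - 1 + 1 - lowb x)%Z with (n - lowb x)%Z in H by lia. exact H. }
  split.
  - intros j. apply in_pZ_mul; apply trunc_in_pZ; lia.
  - intros j. unfold cong.
    set (a1 := trunc (j + 1 + 1 - lowb y) x). set (a0 := trunc (j + 1 - lowb y) x).
    set (b1 := trunc (j + 1 + 1 - lowb x) y). set (b0 := trunc (j + 1 - lowb x) y).
    replace (a1 * b1 - a0 * b0) with ((a1 - a0) * b1 + a0 * (b1 - b0)) by ring.
    apply in_pZ_add.
    + apply in_pZ_weak with ((j + 1 - lowb y) + lowb y)%Z; [lia|].
      apply in_pZ_mul. apply trunc_cong; lia. apply trunc_in_pZ; lia.
    + apply in_pZ_weak with (lowb x + (j + 1 - lowb x))%Z; [lia|].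
      apply in_pZ_mul. apply trunc_in_pZ; lia. apply trunc_cong; lia.
Qed.

Lemma trunc_ofZp (k e n : Z) : cong n (trunc n (ofZp p k e)) (IZR k * pw p e).
Proof.
  unfold ofZp. apply (trunc_mkQp (fun _ => IZR k * pw p e) e). split.
  - intros; apply in_pZ_zpw.
  - intros; apply cong_refl.
Qed.

Lemma trunc_fracQp (x : Qp p) n : cong n (trunc n (fracQp x)) (trunc 0 x).
Proof.
  unfold fracQp. apply (trunc_mkQp (fun _ => fracR x) (lowb x)). split.
  - intros; apply trunc_in_pZ; lia.
  - intros; apply cong_refl.
Qed.

Lemma cong_mulR a k u u' v : cong a u u' -> in_pZ k v -> cong (a + k) (u * v) (u' * v).
Proof. intros. unfold cong. replace (u * v - u' * v) with ((u - u') * v) by ring. apply in_pZ_mul; auto. Qed.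
Lemma cong_mulL a k u u' v : cong a u u' -> in_pZ k v -> cong (k + a) (v * u) (v * u').
Proof. intros. unfold cong. replace (v * u - v * u') with (v * (u - u')) by ring. apply in_pZ_mul; auto. Qed.

Lemma trunc_mulQp (x y : Qp p) Kx Ky n a b : val_ge x Kx -> val_ge y Ky ->
  (n - Ky <= a)%Z -> (n - Kx <= b)%Z -> cong n (trunc n (mulQp x y)) (trunc a x * trunc b y).
Proof.
  intros Hx Hy Ha Hb. pose proof (trunc_mulQp_lowb x y n) as H0.
  set (a0 := (n - lowb y)%Z) in *. set (b0 := (n - lowb x)%Z) in *.
  set (a1 := Z.max a0 a). set (b1 := Z.max b0 b).
  apply cong_trans with (trunc a0 x * trunc b0 y); auto.
  apply cong_trans with (trunc a1 x * trunc b0 y).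
  { apply cong_weak with (a0 + lowb y)%Z. lia. apply cong_mulR. apply cong_sym, trunc_cong. lia. apply val_ge_lowb. }
  apply cong_trans with (trunc a1 x * trunc b1 y).
  { apply cong_weak with (lowb x + b0)%Z. lia. apply cong_mulL. apply cong_sym, trunc_cong. lia. apply val_ge_lowb. }
  apply cong_trans with (trunc a x * trunc b1 y).
  { apply cong_weak with (a + Ky)%Z. lia. apply cong_mulR. apply trunc_cong. lia. apply Hy. }
  { apply cong_weak with (Kx + b)%Z. lia. apply cong_mulL. apply trunc_cong. lia. apply Hx. }
Qed.

Lemma trunc_zeroQp n : trunc n (zeroQp p) = 0.
Proof. apply trunc_eq0_iff. intros. reflexivity. Qed.

Lemma trunc_eq_cong (x : Qp p) n u : 0 <= u < pw p n -> cong n (trunc n x) u -> trunc n x = u.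
Proof. intros. apply (cong_eq n); auto. apply trunc_range. Qed.

Lemma val_ge_ofZp k e : val_ge (ofZp p k e) e.
Proof.
  intros a. destruct (Z_le_gt_dec e a).
  - apply cong_in_pZ with (IZR k * pw p e). apply cong_weak with a. lia. apply trunc_ofZp. apply in_pZ_zpw.
  - rewrite (trunc_eq_cong _ a 0). apply in_pZ_0. split. lra. apply pw_pos.
    apply cong_trans with (IZR k * pw p e). apply trunc_ofZp. unfold cong. rewrite Rminus_0_r.
    apply in_pZ_weak with e. lia. apply in_pZ_zpw.
Qed.

Definition oneQp : Qp p := ofZp p 1 0.
Definition oppQp (x : Qp p) : Qp p := subQp (zeroQp p) x.

Lemma trunc_oneQp n : (1 <= n)%Z -> trunc n oneQp = 1.
Proof.
  intros Hn. apply trunc_eq_cong. split. lra. rewrite <- pw_0. apply pw_lt. lia.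
  pose proof (trunc_ofZp 1 0 n). rewrite pw_0, Rmult_1_r in H. exact H.
Qed.

Lemma addQpC (x y : Qp p) : addQp x y = addQp y x.
Proof.
  apply Qp_eq_cong. intros n. eapply cong_trans. apply trunc_addQp.
  eapply cong_trans. 2: apply cong_sym, trunc_addQp. apply cong_eqR. ring.
Qed.
Lemma addQpA (x y z : Qp p) : addQp x (addQp y z) = addQp (addQp x y) z.
Proof.
  apply Qp_eq_cong. intros n. eapply cong_trans. apply trunc_addQp.
  eapply cong_trans. 2: apply cong_sym, trunc_addQp.
  eapply cong_trans. apply cong_add. apply cong_refl. apply trunc_addQp.
  eapply cong_trans. 2: apply cong_add. 3: apply cong_refl. 2: apply cong_sym, trunc_addQp.
  apply cong_eqR. ring.
Qed.
Lemma add0Qp (x : Qp p) : addQp (zeroQp p) x = x.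
Proof.
  apply Qp_eq_cong. intros n. eapply cong_trans. apply trunc_addQp. rewrite trunc_zeroQp. apply cong_eqR. ring.
Qed.
Lemma mulQpC (x y : Qp p) : mulQp x y = mulQp y x.
Proof.
  apply Qp_eq_cong. intros n. eapply cong_trans. apply trunc_mulQp_lowb.
  eapply cong_trans. 2: apply cong_sym, trunc_mulQp_lowb. apply cong_eqR. ring.
Qed.
Lemma mul1Qp (x : Qp p) : mulQp oneQp x = x.
Proof.
  apply Qp_eq_cong. intros n.
  eapply cong_trans. apply (trunc_mulQp oneQp x 0 (lowb x) n (Z.max 1 (n - lowb x)) n).
  apply val_ge_ofZp. apply val_ge_lowb. lia. lia.
  rewrite trunc_oneQp by lia. apply cong_eqR. ring.
Qed.

Lemma trunc_mulQp_lowb_le (x y : Qp p) n a b :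
  (n - lowb y <= a)%Z -> (n - lowb x <= b)%Z -> cong n (trunc n (mulQp x y)) (trunc a x * trunc b y).
Proof. apply trunc_mulQp; apply val_ge_lowb. Qed.

Lemma mulQpA (x y z : Qp p) : mulQp x (mulQp y z) = mulQp (mulQp x y) z.
Proof.
  apply Qp_eq_cong. intros n.
  set (B := (Z.abs n + Z.abs (lowb x) + Z.abs (lowb y) + Z.abs (lowb z)
             + Z.abs (lowb (mulQp x y)) + Z.abs (lowb (mulQp y z)))%Z).
  apply cong_trans with (trunc B x * (trunc B y * trunc B z)).
  - eapply cong_trans. apply (trunc_mulQp_lowb_le x (mulQp y z) n B (n - lowb x)); lia.
    apply cong_weak with (lowb x + (n - lowb x))%Z. lia. apply cong_mulL. 2: apply val_ge_lowb.
    apply trunc_mulQp_lowb_le; lia.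
  - apply cong_sym. eapply cong_trans. apply (trunc_mulQp_lowb_le (mulQp x y) z n (n - lowb z) B); lia.
    rewrite <- Rmult_assoc.
    apply cong_weak with ((n - lowb z) + lowb z)%Z. lia. apply cong_mulR. 2: apply val_ge_lowb.
    apply trunc_mulQp_lowb_le; lia.
Qed.

Lemma mulQpDl (x y z : Qp p) : mulQp (addQp x y) z = addQp (mulQp x z) (mulQp y z).
Proof.
  apply Qp_eq_cong. intros n.
  set (B := (Z.abs n + Z.abs (lowb x) + Z.abs (lowb y) + Z.abs (lowb z) + Z.abs (lowb (addQp x y)))%Z).
  apply cong_trans with ((trunc (n - lowb z) x + trunc (n - lowb z) y) * trunc B z).
  - eapply cong_trans. apply (trunc_mulQp_lowb_le (addQp x y) z n (n - lowb z) B); lia.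
    apply cong_weak with ((n - lowb z) + lowb z)%Z. lia. apply cong_mulR. 2: apply val_ge_lowb.
    apply trunc_addQp.
  - apply cong_sym. eapply cong_trans. apply trunc_addQp. rewrite Rmult_plus_distr_r.
    apply cong_add; apply trunc_mulQp_lowb_le; lia.
Qed.

Lemma subQpE (x y : Qp p) : subQp x y = addQp x (oppQp y).
Proof.
  apply Qp_eq_cong. intros n. eapply cong_trans. apply trunc_subQp.
  eapply cong_trans. 2: apply cong_sym, trunc_addQp.
  eapply cong_trans. 2: apply cong_add. 2: apply cong_refl. 2: apply cong_sym, trunc_subQp.
  rewrite trunc_zeroQp. apply cong_eqR. ring.
Qed.
Lemma addQpN (x : Qp p) : addQp x (oppQp x) = zeroQp p.
Proof.
  apply Qp_eq_cong. intros n. eapply cong_trans. apply trunc_addQp.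
  eapply cong_trans. apply cong_add. apply cong_refl. apply trunc_subQp.
  rewrite !trunc_zeroQp. apply cong_eqR. ring.
Qed.

Lemma Qp_ring_theory : ring_theory (zeroQp p) oneQp addQp mulQp subQp oppQp (@eq (Qp p)).
Proof. exact (mk_rt _ _ _ _ _ _ _ add0Qp addQpC addQpA mul1Qp mulQpC mulQpA mulQpDl subQpE addQpN). Qed.

Add Ring QpRing : Qp_ring_theory.

(** * Norm, balls and the character *)

Lemma digit_least_nonzero (z : Qp p) j : digit z j <> 0%Z ->
  exists v, digit z v <> 0%Z /\ forall i, (i < v)%Z -> digit z i = 0%Z.
Proof.
  intros Hj. assert (Hk : (j < lowb z + Z.of_nat (Z.to_nat (j - lowb z + 1)))%Z) by lia.
  remember (Z.to_nat (j - lowb z + 1)) as n eqn:En. clear En. revert j Hj Hk. induction n; intros j Hj Hk.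
  - exfalso. apply Hj. apply lowb_spec. lia.
  - destruct (classic (exists i, (i < j)%Z /\ digit z i <> 0%Z)) as [[i [Hi1 Hi2]]|Hn].
    + apply (IHn i); auto. lia.
    + exists j. split; auto. intros i Hi. apply NNPP. intros Hc. apply Hn. exists i. auto.
Qed.

Lemma normQp_le_iff (z : Qp p) g : normQp z <= pw p g <-> trunc (- g) z = 0.
Proof.
  unfold normQp. destruct (excluded_middle_informative _) as [H|H].
  - destruct (constructive_indefinite_description _ H) as [v [Hv1 Hv2]]. simpl. split.
    + intros Hle. apply pw_le_inv in Hle. apply trunc_eq0_iff. intros j Hj. apply Hv2. lia.
    + intros HT. rewrite trunc_eq0_iff in HT. apply pw_le.
      destruct (Z_le_gt_dec (- v) g); auto. exfalso. apply Hv1. apply HT. lia.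
  - split; intros _.
    + apply trunc_eq0_iff. intros j _. destruct (Z.eq_dec (digit z j) 0); auto.
      exfalso. apply H. apply (digit_least_nonzero z j); auto.
    + left; apply pw_pos.
Qed.

Lemma ball_iff g (a x : Qp p) : ball_p g a x <-> trunc (- g) x = trunc (- g) a.
Proof.
  unfold ball_p. rewrite normQp_le_iff. split.
  - intros H. pose proof (trunc_subQp x a (- g)) as C. rewrite H in C.
    apply (cong_eq (- g)); try apply trunc_range.
    unfold cong in *. replace (trunc (- g) x - trunc (- g) a) with (- (0 - (trunc (- g) x - trunc (- g) a))) by ring.
    apply in_pZ_opp; auto.
  - intros H. apply trunc_eq_cong. split. lra. apply pw_pos.
    eapply cong_trans. apply trunc_subQp. rewrite H. apply cong_eqR. ring.
Qed.

Lemma ball0_iff g (x : Qp p) : ball_p g (zeroQp p) x <-> trunc (- g) x = 0.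
Proof. rewrite ball_iff, trunc_zeroQp. tauto. Qed.

Lemma trunc_eq_mono (x y : Qp p) m n : (m <= n)%Z -> trunc n x = trunc n y -> trunc m x = trunc m y.
Proof.
  intros Hmn H. apply (cong_eq m); try apply trunc_range.
  eapply cong_trans. apply cong_sym, trunc_cong; eauto. rewrite H. apply trunc_cong; auto.
Qed.

Lemma ball_mono g g' (a x : Qp p) : (g <= g')%Z -> ball_p g a x -> ball_p g' a x.
Proof. rewrite !ball_iff. intros. apply trunc_eq_mono with (- g)%Z; auto. lia. Qed.

Lemma ball_sym g (a x : Qp p) : ball_p g a x -> ball_p g x a.
Proof. rewrite !ball_iff. auto. Qed.

Lemma ball_val_ge g (x : Qp p) : ball_p g (zeroQp p) x -> val_ge x (- g).
Proof.
  rewrite ball0_iff. intros H a. destruct (Z_le_gt_dec (- g) a).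
  - apply cong_in_pZ with (trunc (- g) x). apply cong_weak with (- g)%Z. lia. apply trunc_cong. lia.
    rewrite H. apply in_pZ_0.
  - assert (trunc a x = 0). { pose proof (trunc_mono x a (- g) ltac:(lia)). pose proof (trunc_range x a). lra. }
    rewrite H0. apply in_pZ_0.
Qed.

Lemma ball_lowb (x : Qp p) : ball_p (- lowb x) (zeroQp p) x.
Proof. rewrite ball0_iff. apply trunc_low. lia. Qed.

Lemma ball_mul A B (u w : Qp p) : ball_p A (zeroQp p) u -> ball_p B (zeroQp p) w ->
  ball_p (A + B) (zeroQp p) (mulQp u w).
Proof.
  intros Hu Hw. pose proof (ball_val_ge _ _ Hu) as Vu. pose proof (ball_val_ge _ _ Hw) as Vw.
  rewrite ball0_iff in *. apply trunc_eq_cong. split. lra. apply pw_pos.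
  eapply cong_trans. apply (trunc_mulQp u w (- A) (- B) (- (A + B)) (- A) (- B)); auto; lia.
  rewrite Hu. apply cong_eqR. ring.
Qed.

Lemma ball_add g (u w : Qp p) : ball_p g (zeroQp p) u -> ball_p g (zeroQp p) w ->
  ball_p g (zeroQp p) (addQp u w).
Proof.
  rewrite !ball0_iff. intros Hu Hw. apply trunc_eq_cong. split. lra. apply pw_pos.
  eapply cong_trans. apply trunc_addQp. rewrite Hu, Hw. apply cong_eqR. ring.
Qed.
Lemma ball_opp g (u : Qp p) : ball_p g (zeroQp p) u -> ball_p g (zeroQp p) (oppQp u).
Proof.
  rewrite !ball0_iff. intros Hu. apply trunc_eq_cong. split. lra. apply pw_pos.
  eapply cong_trans. apply trunc_subQp. rewrite Hu, trunc_zeroQp. apply cong_eqR. ring.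
Qed.

Lemma ball_shift g (a x : Qp p) : ball_p g a x <-> ball_p g (zeroQp p) (subQp x a).
Proof.
  unfold ball_p. replace (subQp (subQp x a) (zeroQp p)) with (subQp x a) by ring. tauto.
Qed.

Lemma trunc_scale (k e : Z) (x : Qp p) n :
  cong n (trunc n (mulQp (ofZp p k e) x)) (IZR k * pw p e * trunc (n - e) x).
Proof.
  set (a := Z.max (n - lowb x) e).
  eapply cong_trans. apply (trunc_mulQp (ofZp p k e) x e (lowb x) n a (n - e)).
  apply val_ge_ofZp. apply val_ge_lowb. lia. lia.
  apply cong_weak with (a + lowb x)%Z. lia. apply cong_mulR. 2: apply val_ge_lowb.
  apply trunc_ofZp.
Qed.

Lemma ofZp_eq k e k' e' : IZR k * pw p e = IZR k' * pw p e' -> ofZp p k e = ofZp p k' e'.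
Proof.
  intros H. apply Qp_eq_cong. intros n. eapply cong_trans. apply trunc_ofZp. rewrite H.
  apply cong_sym, trunc_ofZp.
Qed.

Lemma ofZp_add k k' e : addQp (ofZp p k e) (ofZp p k' e) = ofZp p (k + k') e.
Proof.
  apply Qp_eq_cong. intros n. eapply cong_trans. apply trunc_addQp.
  eapply cong_trans. apply cong_add; apply trunc_ofZp.
  eapply cong_trans. 2: apply cong_sym, trunc_ofZp. apply cong_eqR. rewrite plus_IZR. ring.
Qed.

Lemma ofZp_mul k k' e e' : mulQp (ofZp p k e) (ofZp p k' e') = ofZp p (k * k') (e + e').
Proof.
  apply Qp_eq_cong. intros n. eapply cong_trans. apply trunc_scale.
  eapply cong_trans. apply (cong_weak n (e + (n - e))). lia. apply cong_mulL. apply trunc_ofZp. apply in_pZ_zpw.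
  eapply cong_trans. 2: apply cong_sym, trunc_ofZp. apply cong_eqR. rewrite mult_IZR, pw_add. ring.
Qed.


Lemma chi_trunc0 (x : Qp p) : chi x = (cos (2 * PI * trunc 0 x), sin (2 * PI * trunc 0 x)).
Proof. reflexivity. Qed.

Lemma chi_addQp (x y : Qp p) : chi (addQp x y) = (chi x * chi y)%C.
Proof.
  rewrite !chi_trunc0. destruct (trunc_addQp x y 0) as [z Hz]. rewrite pw_0, Rmult_1_r in Hz.
  replace (2 * PI * trunc 0 (addQp x y)) with ((2 * PI * trunc 0 x + 2 * PI * trunc 0 y) + 2 * IZR z * PI)
    by (replace (trunc 0 (addQp x y)) with (trunc 0 x + trunc 0 y + IZR z) by lra; ring).
  rewrite cos_period_Z, sin_period_Z, cos_plus, sin_plus. unfold Cmult. simpl. f_equal; ring.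
Qed.

Lemma chi_ball0 (x : Qp p) : ball_p 0 (zeroQp p) x -> chi x = 1%C.
Proof.
  rewrite ball0_iff. simpl. intros H. rewrite chi_trunc0, H, Rmult_0_r, cos_0, sin_0. reflexivity.
Qed.


Lemma ofZp0 e : ofZp p 0 e = zeroQp p.
Proof. apply Qp_eq_cong. intros n. rewrite trunc_zeroQp. eapply cong_trans. apply trunc_ofZp. apply cong_eqR. ring. Qed.

Lemma ball0_ofZp g k e : ((- g) <= e)%Z -> ball_p g (zeroQp p) (ofZp p k e).
Proof.
  intros H. apply ball0_iff. apply trunc_eq_cong. split. lra. apply pw_pos.
  eapply cong_trans. apply trunc_ofZp. unfold cong. rewrite Rminus_0_r. apply in_pZ_weak with e; auto. apply in_pZ_zpw.
Qed.

Lemma ball_ofZp l e m m' : cong (- l) (IZR m * pw p e) (IZR m' * pw p e) -> ball_p l (ofZp p m' e) (ofZp p m e).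
Proof.
  intros H. apply ball_iff. apply (cong_eq (- l)); try apply trunc_range.
  eapply cong_trans. apply trunc_ofZp. eapply cong_trans. apply H. apply cong_sym, trunc_ofZp.
Qed.

Lemma ofZp_not_ball0 R q r : (0 < r < Zpos p)%Z -> ~ ball_p R (zeroQp p) (ofZp p (q * Zpos p + r) (- (R + 1))).
Proof.
  intros Hr Hb. rewrite ball0_iff in Hb.
  destruct (trunc_ofZp (q * Zpos p + r) (- (R + 1)) (- R)) as [z Hz]. rewrite Hb in Hz.
  assert (E : IZR (q * Zpos p + r) = IZR (- z * Zpos p)).
  { rewrite !mult_IZR, opp_IZR. replace (- R)%Z with (- (R + 1) + 1)%Z in Hz by lia.
    rewrite pw_add, pw_1 in Hz. apply (Rmult_eq_reg_r (pw p (- (R + 1)))). lra. pose proof (pw_pos (- (R + 1))). lra. }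
  apply eq_IZR in E. assert (r = (- z - q) * Zpos p)%Z as Er by lia.
  destruct (Z_le_gt_dec (- z - q) 0); nia.
Qed.

Lemma list_in_ball (L : list (Qp p)) : exists R, forall a, In a L -> ball_p R (zeroQp p) a.
Proof.
  induction L as [|b L IH]. exists 0%Z. intros a []. destruct IH as [R HR]. exists (Z.max (- lowb b) R).
  intros a [E|Ha]. subst a. apply ball_mono with (- lowb b)%Z. lia. apply ball_lowb.
  apply ball_mono with R. lia. auto.
Qed.

Lemma exists_riemann_node l R (x : Qp p) : (l <= R)%Z -> ball_p R (zeroQp p) x ->
  exists n : nat, (n < Z.to_nat (Zpos p ^ (R - l)))%nat /\ ball_p l (ofZp p (Z.of_nat n) (- R)) x.
Proof.
  intros HlR Hx. destruct (ball_val_ge _ _ Hx (- l)%Z) as [z Hz].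
  pose proof (trunc_range x (- l)) as [T1 T2]. rewrite Hz in T1, T2.
  assert (Hz0 : (0 <= z)%Z).
  { apply le_IZR. pose proof (pw_pos (- R)). nra. }
  assert (Hzl : (z < Zpos p ^ (R - l))%Z).
  { apply lt_IZR. rewrite <- pw_nat by lia.
    replace (- l)%Z with (- R + (R - l))%Z in T2 by lia. rewrite pw_add in T2.
    pose proof (pw_pos (- R)). nra. }
  exists (Z.to_nat z). split. lia.
  apply ball_sym, ball_iff. rewrite Hz. apply trunc_eq_cong.
  split. rewrite <- Hz. apply trunc_range. rewrite <- Hz. apply trunc_range.
  rewrite Z2Nat.id by lia. apply trunc_ofZp.
Qed.

(** * The Haar integral *)

Lemma riemann_sum_csum (f : Qp p -> C) R l : riemann_sum f (R, l) =
  (RtoC (pw p l) * csum (Z.to_nat (Zpos p ^ (R - l))) (fun n => f (ofZp p (Z.of_nat n) (- R))))%C.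
Proof. unfold riemann_sum. simpl. rewrite sumC_map_seq. reflexivity. Qed.

Lemma good_pair_mono (f : Qp p -> C) R l R' l' : good_pair f (R, l) -> (R <= R')%Z -> (l' <= l)%Z ->
  good_pair f (R', l').
Proof.
  intros [H1 [H2 H3]] HR Hl. simpl in *. split; [|split]; simpl.
  - lia.
  - intros x Hx. apply ball_mono with R; auto.
  - intros x y Hxy. apply H3. apply ball_mono with l'; auto.
Qed.

(* The nodes of radius [R + 1] are [(q p + r) p^-(R+1)]; only those with [r = 0], the nodes of
   radius [R], meet the support. *)
Lemma riemann_sum_radius_succ (f : Qp p -> C) R l : good_pair f (R, l) ->
  riemann_sum f ((R + 1)%Z, l) = riemann_sum f (R, l).
Proof.
  intros G. pose proof G as [H1 [H2 H3]]. simpl in *. rewrite !riemann_sum_csum.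
  set (K := Z.to_nat (Zpos p ^ (R - l))).
  replace (Z.to_nat (Zpos p ^ (R + 1 - l))) with (K * Pos.to_nat p)%nat.
  2:{ unfold K. replace (R + 1 - l)%Z with (Z.succ (R - l)) by lia. rewrite Z.pow_succ_r by lia.
      rewrite Z.mul_comm. rewrite Z2Nat.inj_mul. reflexivity. apply Z.pow_nonneg; lia. lia. }
  rewrite csum_mul. f_equal. apply csum_ext. intros q Hq.
  replace (Pos.to_nat p) with (S (Pos.to_nat p - 1)) by lia. rewrite csum_first.
  - f_equal. apply ofZp_eq. rewrite Nat.add_0_r, Nat2Z.inj_mul, mult_IZR.
    replace (Z.of_nat (S (Pos.to_nat p - 1))) with (Zpos p) by lia.
    replace (- R)%Z with (- (R + 1) + 1)%Z by lia. rewrite (pw_add (- (R + 1))), pw_1. ring.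
  - intros r Hr. destruct (classic (f (ofZp p (Z.of_nat (q * S (Pos.to_nat p - 1) + r)) (- (R + 1))) = 0%C))
      as [E|E]; auto.
    exfalso. apply H2 in E. revert E.
    replace (Z.of_nat (q * S (Pos.to_nat p - 1) + r)) with (Z.of_nat q * Zpos p + Z.of_nat r)%Z by lia.
    apply ofZp_not_ball0. lia.
Qed.

(* Refining the mesh by a factor [p] repeats every node [p] times, up to points of the same
   [p^l]-ball. *)
Lemma riemann_sum_mesh_pred (f : Qp p -> C) R l : good_pair f (R, l) ->
  riemann_sum f (R, (l - 1)%Z) = riemann_sum f (R, l).
Proof.
  intros G. pose proof G as [H1 [H2 H3]]. simpl in *. rewrite !riemann_sum_csum.
  set (K := Z.to_nat (Zpos p ^ (R - l))).
  replace (Z.to_nat (Zpos p ^ (R - (l - 1)))) with (Pos.to_nat p * K)%nat.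
  2:{ unfold K. replace (R - (l - 1))%Z with (Z.succ (R - l)) by lia. rewrite Z.pow_succ_r by lia.
      rewrite Z2Nat.inj_mul. reflexivity. lia. apply Z.pow_nonneg; lia. }
  rewrite csum_mul.
  rewrite (csum_ext _ _ (fun _ => csum K (fun n => f (ofZp p (Z.of_nat n) (- R))))).
  - rewrite csum_const. rewrite INR_IZR_INZ, positive_nat_Z. rewrite Cmult_assoc, <- RtoC_mult.
    f_equal. f_equal. replace l with ((l - 1) + 1)%Z at 2 by lia. rewrite pw_add, pw_1. ring.
  - intros q Hq. apply csum_ext. intros r Hr. apply H3. apply ball_ofZp.
    exists (Z.of_nat q). rewrite Nat2Z.inj_add, Nat2Z.inj_mul, plus_IZR, mult_IZR.
    unfold K. rewrite Z2Nat.id, <- pw_nat by (try apply Z.pow_nonneg; lia).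
    replace (- R)%Z with (- l + - (R - l))%Z by lia. rewrite !pw_add, !pw_opp.
    field. pose proof (pw_pos (R - l)). pose proof (pw_pos l). lra.
Qed.

Lemma riemann_sum_mono (f : Qp p -> C) R l R' l' : good_pair f (R, l) -> (R <= R')%Z -> (l' <= l)%Z ->
  riemann_sum f (R', l') = riemann_sum f (R, l).
Proof.
  intros G HR Hl.
  assert (E1 : forall k : nat, riemann_sum f ((R + Z.of_nat k)%Z, l) = riemann_sum f (R, l)).
  { induction k. simpl. rewrite Z.add_0_r. auto.
    replace (R + Z.of_nat (S k))%Z with ((R + Z.of_nat k) + 1)%Z by lia. rewrite riemann_sum_radius_succ. auto.
    apply good_pair_mono with R l; auto; lia. }
  assert (E2 : forall k : nat, riemann_sum f (R', (l - Z.of_nat k)%Z) = riemann_sum f (R', l)).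
  { induction k. simpl. rewrite Z.sub_0_r. auto.
    replace (l - Z.of_nat (S k))%Z with (l - Z.of_nat k - 1)%Z by lia.
    rewrite riemann_sum_mesh_pred. auto. apply good_pair_mono with R l; auto; lia. }
  specialize (E1 (Z.to_nat (R' - R))). specialize (E2 (Z.to_nat (l - l'))).
  rewrite Z2Nat.id in E1, E2 by lia. replace (R + (R' - R))%Z with R' in E1 by lia.
  replace (l - (l - l'))%Z with l' in E2 by lia. congruence.
Qed.

Lemma integral_riemann_sum (f : Qp p -> C) R l : good_pair f (R, l) -> integral f = riemann_sum f (R, l).
Proof.
  intros G. unfold integral. destruct (excluded_middle_informative _) as [H|H].
  - destruct (constructive_indefinite_description _ H) as [[R1 l1] G1]. simpl.
    rewrite <- (riemann_sum_mono f R1 l1 (Z.max R R1) (Z.min l l1)); auto; try lia.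
    apply riemann_sum_mono; auto; lia.
  - exfalso. apply H. exists (R, l). auto.
Qed.

Definition integrable (f : Qp p -> C) : Prop := exists R l, good_pair f (R, l).

Lemma good_pair_comp (f : Qp p -> C) (F : C -> C) R l : F 0%C = 0%C ->
  good_pair f (R, l) -> good_pair (fun x => F (f x)) (R, l).
Proof.
  intros F0 [H1 [H2 H3]]. split; [|split]; simpl in *; auto.
  - intros x Hx. apply H2. intros E. apply Hx. rewrite E. exact F0.
  - intros x y H. rewrite (H3 x y H). reflexivity.
Qed.

Lemma good_pair_binop (f g : Qp p -> C) (op : C -> C -> C) R l : op 0%C 0%C = 0%C ->
  good_pair f (R, l) -> good_pair g (R, l) -> good_pair (fun x => op (f x) (g x)) (R, l).
Proof.
  intros op0 [F1 [F2 F3]] [G1 [G2 G3]]. simpl in *. split; [|split]; simpl; auto.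
  - intros x Hx. destruct (classic (f x = 0%C)) as [E|E]. 2: auto.
    apply G2. intros E'. apply Hx. rewrite E, E'. exact op0.
  - intros x y H. rewrite (F3 x y H), (G3 x y H). reflexivity.
Qed.

Lemma good_pair_scal (f : Qp p -> C) c R l : good_pair f (R, l) -> good_pair (fun x => c * f x)%C (R, l).
Proof. apply (good_pair_comp f (fun z => c * z)%C). ring. Qed.

Lemma good_pair_mul_locally_const (f g : Qp p -> C) R l l' :
  good_pair f (R, l) -> (forall x y, ball_p l' y x -> g x = g y) ->
  good_pair (fun x => g x * f x)%C (R, Z.min l l').
Proof.
  intros [F1 [F2 F3]] Hg. simpl in *. split; [|split]; simpl.
  - lia.
  - intros x Hx. apply F2. intros E. apply Hx. rewrite E. ring.
  - intros x y H. rewrite (F3 x y), (Hg x y). reflexivity.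
    apply ball_mono with (Z.min l l'); auto; lia. apply ball_mono with (Z.min l l'); auto; lia.
Qed.

Lemma good_pair_sumC {A : Type} (G : A -> Qp p -> C) (L : list A) R l : (l <= R)%Z ->
  (forall k, In k L -> good_pair (G k) (R, l)) -> good_pair (fun x => sumC (map (fun k => G k x) L)) (R, l).
Proof.
  intros HlR. induction L as [|k L IH]; intros H; simpl.
  - split; [|split]; simpl; auto. intros x Hx. exfalso. auto.
  - apply (good_pair_binop (G k) _ Cplus). ring. apply H; simpl; auto.
    apply IH. intros; apply H; simpl; auto.
Qed.

Lemma integrable_plus f g : integrable f -> integrable g -> integrable (fun x => f x + g x)%C.
Proof.
  intros [R1 [l1 G1]] [R2 [l2 G2]]. exists (Z.max R1 R2), (Z.min l1 l2). apply good_pair_binop. ring.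
  apply good_pair_mono with R1 l1; auto; lia. apply good_pair_mono with R2 l2; auto; lia.
Qed.

Lemma integral_plus f g : integrable f -> integrable g ->
  integral (fun x => f x + g x)%C = (integral f + integral g)%C.
Proof.
  intros [R1 [l1 G1]] [R2 [l2 G2]].
  assert (G1' : good_pair f (Z.max R1 R2, Z.min l1 l2)) by (apply good_pair_mono with R1 l1; auto; lia).
  assert (G2' : good_pair g (Z.max R1 R2, Z.min l1 l2)) by (apply good_pair_mono with R2 l2; auto; lia).
  assert (G : good_pair (fun x => f x + g x)%C (Z.max R1 R2, Z.min l1 l2))
    by (apply good_pair_binop; auto; ring).
  rewrite (integral_riemann_sum _ _ _ G), (integral_riemann_sum _ _ _ G1'), (integral_riemann_sum _ _ _ G2').
  rewrite !riemann_sum_csum, csum_plus. ring.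
Qed.

Lemma integral_scal f c : integrable f -> integral (fun x => c * f x)%C = (c * integral f)%C.
Proof.
  intros [R [l G]]. rewrite (integral_riemann_sum _ _ _ (good_pair_scal _ c _ _ G)), (integral_riemann_sum _ _ _ G).
  rewrite !riemann_sum_csum, csum_scal. ring.
Qed.

Lemma integral_zero : integral (fun _ : Qp p => 0%C) = 0%C.
Proof.
  assert (G : good_pair (fun _ : Qp p => 0%C) (0%Z, 0%Z)).
  { split; [|split]; simpl. lia. intros x H. exfalso; auto. auto. }
  rewrite (integral_riemann_sum _ _ _ G), riemann_sum_csum, csum_zero. ring.
Qed.

Lemma integrable_sum {A : Type} (G : A -> Qp p -> C) (L : list A) :
  (forall k, In k L -> integrable (G k)) -> integrable (fun x => sumC (map (fun k => G k x) L)).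
Proof.
  induction L; intros H; simpl.
  - exists 0%Z, 0%Z. split; [|split]; simpl. lia. intros x Hx. exfalso; auto. auto.
  - apply integrable_plus. apply H; simpl; auto. apply IHL. intros; apply H; simpl; auto.
Qed.

Lemma integral_sum {A : Type} (G : A -> Qp p -> C) (L : list A) :
  (forall k, In k L -> integrable (G k)) ->
  integral (fun x => sumC (map (fun k => G k x) L)) = sumC (map (fun k => integral (G k)) L).
Proof.
  induction L; intros H; simpl.
  - apply integral_zero.
  - rewrite integral_plus. rewrite IHL. auto. intros; apply H; simpl; auto.
    apply H; simpl; auto. apply integrable_sum. intros; apply H; simpl; auto.
Qed.

Lemma Re_integral_ge_point (f : Qp p -> C) R l x0 : good_pair f (R, l) ->
  (forall x, 0 <= Re (f x)) -> ball_p R (zeroQp p) x0 -> pw p l * Re (f x0) <= Re (integral f).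
Proof.
  intros G Hf Hx0. rewrite (integral_riemann_sum _ _ _ G), riemann_sum_csum, Re_RtoC_mult.
  destruct G as [HlR [_ Hconst]]. simpl in *.
  destruct (exists_riemann_node l R x0 HlR Hx0) as [n [Hn Hnx]].
  rewrite (Hconst x0 _ Hnx). apply Rmult_le_compat_l. left; apply pw_pos.
  apply (Re_csum_ge_term _ (fun n => f (ofZp p (Z.of_nat n) (- R)))); auto.
Qed.

Lemma l2norm_ge_point (f : Qp p -> C) R l x0 : good_pair (fun x => RtoC (Cmod (f x) ^ 2)) (R, l) ->
  ball_p R (zeroQp p) x0 -> sqrt (pw p l * Cmod (f x0) ^ 2) <= l2norm f.
Proof.
  intros G Hx0. unfold l2norm. apply sqrt_le_1_alt.
  apply (Re_integral_ge_point _ R l x0 G); auto. intros x. apply pow2_ge_0.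
Qed.

(** * Dilation *)

Definition dilate (x : Qp p) : Qp p := mulQp (ofZp p 1 (-1)) x.

Lemma trunc_dilate_sub (x a : Qp p) n :
  cong n (trunc n (subQp (dilate x) a)) (pw p (-1) * trunc (n + 1) x - trunc n a).
Proof.
  eapply cong_trans. apply trunc_subQp. apply cong_sub. 2: apply cong_refl.
  eapply cong_trans. apply trunc_scale. replace (n - -1)%Z with (n + 1)%Z by lia. apply cong_eqR. ring.
Qed.

Lemma trunc_dilate_sub_inv (x a : Qp p) n :
  cong (n + 1) (trunc (n + 1) x) (P * (trunc n (subQp (dilate x) a) + trunc n a)).
Proof.
  assert (HP : in_pZ 1 P) by (rewrite <- pw_1; apply in_pZ_pw).
  pose proof (cong_mulL _ _ _ _ P (trunc_dilate_sub x a n) HP) as H.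
  replace (1 + n)%Z with (n + 1)%Z in H by lia.
  unfold cong in *. destruct H as [z Hz]. exists (- z)%Z. rewrite opp_IZR.
  replace (pw p (-1)) with (/ P) in Hz by (rewrite <- pw_1, <- pw_opp; reflexivity).
  rewrite Rmult_minus_distr_l, <- Rmult_assoc, Rinv_r in Hz by apply p_neq0. lra.
Qed.

Lemma ball_dilate_sub l (x y a : Qp p) : ball_p (l - 1) y x -> ball_p l (subQp (dilate y) a) (subQp (dilate x) a).
Proof.
  rewrite !ball_iff. replace (- (l - 1))%Z with (- l + 1)%Z by lia. intros H.
  apply (cong_eq (- l)); try apply trunc_range.
  eapply cong_trans. apply trunc_dilate_sub. rewrite H. apply cong_sym, trunc_dilate_sub.
Qed.

Lemma ball_of_dilate_sub R (x a : Qp p) : ball_p R (zeroQp p) a -> ball_p R (zeroQp p) (subQp (dilate x) a) ->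
  ball_p (R - 1) (zeroQp p) x.
Proof.
  rewrite !ball0_iff. intros Ha Hx. replace (- (R - 1))%Z with (- R + 1)%Z by lia.
  apply trunc_eq_cong. split. lra. apply pw_pos.
  eapply cong_trans. apply trunc_dilate_sub_inv. rewrite Ha, Hx. apply cong_eqR. ring.
Qed.

Lemma ball_dilate g (x : Qp p) : ball_p g (zeroQp p) x -> ball_p (g + 1) (zeroQp p) (dilate x).
Proof.
  intros H. replace (g + 1)%Z with (1 + g)%Z by lia. apply ball_mul; auto. apply ball0_ofZp. lia.
Qed.

Lemma good_pair_dilate_sub (F : Qp p -> C) R l (a : Qp p) : good_pair F (R, l) -> ball_p R (zeroQp p) a ->
  good_pair (fun x => F (subQp (dilate x) a)) ((R - 1)%Z, (l - 1)%Z).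
Proof.
  intros [F1 [F2 F3]] Ha. simpl in *. split; [|split]; simpl.
  - lia.
  - intros x Hx. apply ball_of_dilate_sub with a; auto.
  - intros x y Hxy. apply F3. apply ball_dilate_sub. auto.
Qed.

(* Writing [trunc (-l) a = A p^-R], the map [x |-> x/p - a] sends the [n]-th node of radius
   [R - 1] into the [p^l]-ball of the node of radius [R] with index [(n - A) mod p^(R-l)]. *)
Lemma ball_dilate_sub_node R l (a : Qp p) A (n : nat) : (l <= R)%Z -> trunc (- l) a = IZR A * pw p (- R) ->
  ball_p l (ofZp p ((Z.of_nat n - A) mod Zpos p ^ (R - l)) (- R))
           (subQp (dilate (ofZp p (Z.of_nat n) (- (R - 1)))) a).
Proof.
  intros HlR HA. apply ball_iff.
  apply (cong_eq (- l)); [apply trunc_range | apply trunc_range |].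
  apply cong_trans with (pw p (-1) * trunc (- l + 1) (ofZp p (Z.of_nat n) (- (R - 1))) - trunc (- l) a).
  { apply trunc_dilate_sub. }
  apply cong_trans with (pw p (-1) * (IZR (Z.of_nat n) * pw p (- (R - 1))) - IZR A * pw p (- R)).
  { apply cong_sub. 2: rewrite HA; apply cong_refl.
    replace (- l)%Z with (-1 + (- l + 1))%Z at 1 by lia. apply cong_mulL. apply trunc_ofZp. apply in_pZ_pw. }
  apply cong_trans with (IZR ((Z.of_nat n - A) mod Zpos p ^ (R - l)) * pw p (- R)).
  2: apply cong_sym, trunc_ofZp.
  assert (Hpos : (0 < Zpos p ^ (R - l))%Z) by (apply Z.pow_pos_nonneg; lia).
  unfold cong. rewrite (Z.mod_eq (Z.of_nat n - A) (Zpos p ^ (R - l))) by lia.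
  exists ((Z.of_nat n - A) / Zpos p ^ (R - l))%Z.
  rewrite minus_IZR, mult_IZR, minus_IZR, <- pw_nat by lia.
  replace (- R)%Z with (- l + - (R - l))%Z by lia.
  replace (- (R - 1))%Z with (- l + - (R - l) + 1)%Z by lia.
  rewrite !pw_add, !pw_opp, pw_1. replace (pw p (-1)) with (/ P) by (rewrite <- pw_1, <- pw_opp; reflexivity).
  field. pose proof (pw_pos (R - l)). pose proof (pw_pos l). pose proof p_neq0. repeat split; lra.
Qed.

Lemma integral_dilate_sub (F : Qp p -> C) R l (a : Qp p) : good_pair F (R, l) -> ball_p R (zeroQp p) a ->
  integral (fun x => F (subQp (dilate x) a)) = (RtoC (/ P) * integral F)%C.
Proof.
  intros GF Ha. pose proof (good_pair_dilate_sub F R l a GF Ha) as GG.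
  pose proof GF as [HlR [_ F3]]. simpl in *.
  rewrite (integral_riemann_sum _ _ _ GG), (integral_riemann_sum _ _ _ GF), !riemann_sum_csum.
  replace (R - 1 - (l - 1))%Z with (R - l)%Z by lia.
  set (K := Z.to_nat (Zpos p ^ (R - l))).
  assert (HK : Z.of_nat K = (Zpos p ^ (R - l))%Z).
  { unfold K. rewrite Z2Nat.id. auto. apply Z.pow_nonneg. lia. }
  assert (HK0 : (0 < K)%nat). { assert (0 < Zpos p ^ (R - l))%Z by (apply Z.pow_pos_nonneg; lia). lia. }
  destruct (ball_val_ge _ _ Ha (- l)%Z) as [A HA].
  set (H := fun m : Z => F (ofZp p (Z.of_nat (Z.to_nat m)) (- R))).
  rewrite (csum_ext K _ (fun n => H ((Z.of_nat n + - A) mod Z.of_nat K)%Z)).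
  - rewrite csum_rotate by auto. unfold H.
    rewrite (csum_ext K (fun n => F (ofZp p (Z.of_nat (Z.to_nat (Z.of_nat n))) (- R)))
              (fun n => F (ofZp p (Z.of_nat n) (- R)))).
    2:{ intros i _. rewrite Nat2Z.id. reflexivity. }
    rewrite Cmult_assoc, <- RtoC_mult. f_equal. f_equal.
    replace l with ((l - 1) + 1)%Z at 2 by lia. rewrite pw_add, pw_1. field. apply p_neq0.
  - intros n Hn. unfold H. apply F3.
    rewrite HK, Z2Nat.id by (apply Z.mod_pos_bound; lia).
    replace (Z.of_nat n + - A)%Z with (Z.of_nat n - A)%Z by lia.
    apply ball_dilate_sub_node; auto.
Qed.

(** * Refinable functions in [D_N^M] *)

Section TestFunction.
Variables (N M : Z) (phi : Qp p -> C).
Hypothesis HN : (0 <= N)%Z.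
Hypothesis HD : in_D p N M phi.

Lemma phi_support x : phi x <> 0%C -> ball_p N (zeroQp p) x.
Proof. apply HD. Qed.

Lemma phi_periodic_nat (n : nat) y : phi (addQp y (ofZp p (Z.of_nat n) M)) = phi y.
Proof.
  induction n.
  - simpl. rewrite ofZp0. f_equal. ring.
  - rewrite Nat2Z.inj_succ. unfold Z.succ. rewrite <- ofZp_add.
    replace (addQp y (addQp (ofZp p (Z.of_nat n) M) (ofZp p 1 M)))
      with (addQp (addQp y (ofZp p (Z.of_nat n) M)) (ofZp p 1 M)) by ring.
    destruct HD as [_ [Hper _]]. rewrite Hper. auto.
Qed.

(* [phi] is constant on balls of some radius [p^l] around [x]; a difference [z] in [B_-M] is
   [k p^M] plus an element of [B_l], so periodicity bridges the gap. *)
Lemma phi_locally_const x y : ball_p (- M) y x -> phi x = phi y.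
Proof.
  intros Hxy0. pose proof (proj1 (ball_shift (- M) y x) Hxy0) as Hxy. clear Hxy0.
  revert Hxy. remember (subQp x y) as z eqn:Ez. intros Hxy.
  destruct HD as [[Hlc _] _]. destruct (Hlc x) as [l Hl].
  set (l' := Z.min l (- M)).
  destruct (ball_val_ge _ _ Hxy (- l')%Z) as [k Hk]. replace (- - M)%Z with M in Hk by lia.
  assert (Hk0 : (0 <= k)%Z).
  { pose proof (trunc_range z (- l')) as [T1 _]. rewrite Hk in T1. apply le_IZR. pose proof (pw_pos M). nra. }
  set (w := subQp (ofZp p k M) z).
  assert (Hw : ball_p l (zeroQp p) w).
  { apply ball_mono with l'. lia. apply ball0_iff. apply trunc_eq_cong. split. lra. apply pw_pos.
    eapply cong_trans. apply trunc_subQp. rewrite Hk. eapply cong_trans. apply cong_sub. apply trunc_ofZp. apply cong_refl.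
    apply cong_eqR. ring. }
  rewrite <- (Hl w Hw).
  replace (addQp x w) with (addQp y (ofZp p (Z.of_nat (Z.to_nat k)) M)).
  apply phi_periodic_nat. rewrite Z2Nat.id by lia. unfold w. subst z. ring.
Qed.

Lemma good_pair_phi : good_pair phi (N, Z.min (- M) N).
Proof.
  split; [|split]; simpl. lia. apply phi_support.
  intros x y H. apply phi_locally_const. apply ball_mono with (Z.min (- M) N). lia. auto.
Qed.

Definition grid (k : nat) : Qp p := ofZp p (Z.of_nat k) (- (N + 1)).
Definition grid_list : list (Qp p) := map grid (seq 0 (ncoef p N)).

Lemma ncoef_Z : Z.of_nat (ncoef p N) = (Zpos p ^ (N + 1))%Z.
Proof. unfold ncoef. rewrite Z2Nat.id. auto. apply Z.pow_nonneg. lia. Qed.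

Lemma trunc0_grid k : (k < ncoef p N)%nat -> trunc 0 (grid k) = IZR (Z.of_nat k) * pw p (- (N + 1)).
Proof.
  intros Hk. unfold grid. apply trunc_eq_cong. 2: apply trunc_ofZp. pose proof (pw_pos (- (N + 1))).
  split. apply Rmult_le_pos. apply IZR_le. lia. lra.
  rewrite pw_0. apply (Rmult_lt_reg_r (pw p (N + 1))). apply pw_pos.
  rewrite Rmult_assoc, <- pw_add. replace (- (N + 1) + (N + 1))%Z with 0%Z by lia. rewrite pw_0.
  rewrite Rmult_1_r, Rmult_1_l, pw_nat by lia. apply IZR_lt. rewrite <- ncoef_Z. lia.
Qed.

Lemma grid_in_Ip k : (k < ncoef p N)%nat -> in_Ip (grid k).
Proof.
  intros Hk. unfold in_Ip. apply Qp_eq_cong. intros n.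
  eapply cong_trans. apply trunc_fracQp. rewrite trunc0_grid by auto. unfold grid. apply cong_sym, trunc_ofZp.
Qed.

Lemma ball_grid k : ball_p (N + 1) (zeroQp p) (grid k).
Proof. unfold grid. apply ball0_ofZp. lia. Qed.

Lemma grid_inj i j : (i < ncoef p N)%nat -> (j < ncoef p N)%nat -> grid i = grid j -> i = j.
Proof.
  intros Hi Hj E. pose proof (trunc0_grid i Hi) as Ei. rewrite E, trunc0_grid in Ei by auto.
  apply Rmult_eq_reg_r in Ei. apply eq_IZR in Ei. lia. pose proof (pw_pos (- (N + 1))). lra.
Qed.

Lemma in_grid_list a : In a grid_list <-> exists k, (k < ncoef p N)%nat /\ a = grid k.
Proof.
  unfold grid_list. rewrite in_map_iff. split.
  - intros [k [E Hk]]. apply in_seq in Hk. exists k. split. lia. auto.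
  - intros [k [Hk E]]. exists k. split. auto. apply in_seq. lia.
Qed.

Lemma Ip_ball_grid a : in_Ip a -> ball_p (N + 1) (zeroQp p) a -> In a grid_list.
Proof.
  intros Ha Hb. apply in_grid_list. destruct (ball_val_ge _ _ Hb 0%Z) as [z Hz].
  pose proof (trunc_range a 0) as [T1 T2]. rewrite Hz in T1, T2. rewrite pw_0 in T2.
  assert (Hz0 : (0 <= z)%Z). { apply le_IZR. pose proof (pw_pos (- (N + 1))). nra. }
  assert (Hzl : (z < Zpos p ^ (N + 1))%Z).
  { apply lt_IZR. rewrite <- pw_nat by lia.
    apply (Rmult_lt_reg_r (pw p (- (N + 1)))). apply pw_pos. rewrite <- pw_add.
    replace (N + 1 + - (N + 1))%Z with 0%Z by lia. rewrite pw_0. lra. }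
  exists (Z.to_nat z). split. rewrite <- ncoef_Z in Hzl. lia.
  apply Qp_eq_cong. intros n. unfold grid. rewrite Z2Nat.id by lia.
  rewrite <- Ha at 1. eapply cong_trans. apply trunc_fracQp. rewrite Hz. apply cong_sym, trunc_ofZp.
Qed.

Lemma Ip_list_extend (F : list (Qp p)) : (forall a, In a F -> in_Ip a) ->
  exists Fr, NoDup (grid_list ++ Fr) /\ incl F (grid_list ++ Fr) /\
    (forall a, In a Fr -> in_Ip a /\ ~ ball_p (N + 1) (zeroQp p) a).
Proof.
  intros HF.
  set (outside := fun a => if excluded_middle_informative (In a grid_list) then false else true).
  assert (Hout : forall a, outside a = true <-> ~ In a grid_list).
  { intros a. unfold outside. destruct (excluded_middle_informative _); split; intros; tauto || discriminate. }
  exists (filter outside (nodup (fun a b => excluded_middle_informative (a = b)) F)).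
  assert (HFr : forall a, In a (filter outside (nodup (fun a b => excluded_middle_informative (a = b)) F))
                          <-> In a F /\ ~ In a grid_list).
  { intros a. rewrite filter_In, nodup_In, Hout. tauto. }
  split; [|split].
  - apply NoDup_app.
    + apply NoDup_map_seq. intros i j Hi Hj. apply grid_inj; auto.
    + apply NoDup_filter, NoDup_nodup.
    + intros a Ha HaF. apply HFr in HaF. tauto.
  - intros a Ha. apply in_or_app. destruct (classic (In a grid_list)); auto. right. apply HFr. auto.
  - intros a Ha. apply HFr in Ha as [Ha1 Ha2]. split; auto. intros Hb. apply Ha2, Ip_ball_grid; auto.
Qed.

Lemma phi_dilate_sub_far a x : ~ ball_p (N + 1) (zeroQp p) a -> ball_p N (zeroQp p) x ->
  phi (subQp (dilate x) a) = 0%C.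
Proof.
  intros Hb Hx. destruct (classic (phi (subQp (dilate x) a) = 0%C)) as [E|E]; auto.
  exfalso. apply Hb. apply phi_support in E.
  replace a with (addQp (dilate x) (oppQp (subQp (dilate x) a))) by ring.
  apply ball_add. apply ball_dilate; auto. apply ball_opp. apply ball_mono with N. lia. auto.
Qed.

Lemma phi_dilate_sub_grid_outside x k : ~ ball_p N (zeroQp p) x -> phi (subQp (dilate x) (grid k)) = 0%C.
Proof.
  intros Hx. destruct (classic (phi (subQp (dilate x) (grid k)) = 0%C)) as [E|E]; auto.
  exfalso. apply Hx. apply phi_support in E. replace N with (N + 1 - 1)%Z by lia.
  apply ball_of_dilate_sub with (grid k). apply ball_grid. apply ball_mono with N. lia. auto.
Qed.

Definition refine_sum (h : nat -> C) (x : Qp p) : C :=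
  sumC (map (fun k => (h k * phi (subQp (dilate x) (grid k)))%C) (seq 0 (ncoef p N))).

Definition refine_error (alpha : Qp p -> C) (G : list (Qp p)) (x : Qp p) : C :=
  (phi x - sumC (map (fun a => alpha a * phi (subQp (dilate x) a)) G))%C.

Lemma refinement_eq_outside h x : ~ ball_p N (zeroQp p) x -> phi x = refine_sum h x.
Proof.
  intros Hx. destruct (classic (phi x = 0%C)) as [E|E].
  2: exfalso; apply Hx, phi_support, E.
  rewrite E. unfold refine_sum. rewrite sumC_map_eq0. auto.
  intros k _. rewrite phi_dilate_sub_grid_outside by auto. ring.
Qed.

Lemma refine_error_on_ball alpha Fr x : (forall a, In a Fr -> ~ ball_p (N + 1) (zeroQp p) a) ->
  ball_p N (zeroQp p) x -> refine_error alpha (grid_list ++ Fr) x = (phi x - refine_sum (fun k => alpha (grid k)) x)%C.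
Proof.
  intros HFr Hx. unfold refine_error, refine_sum, grid_list.
  rewrite map_app, sumC_app, (sumC_map_eq0 _ Fr), map_map, Cplus_0_r. reflexivity.
  intros a Ha. rewrite phi_dilate_sub_far by auto. ring.
Qed.

Lemma good_pair_refine_error alpha G RG : (forall a, In a G -> ball_p RG (zeroQp p) a) ->
  good_pair (fun x => RtoC (Cmod (refine_error alpha G x) ^ 2)) (Z.max N RG, (Z.min (- M) N - 1)%Z).
Proof.
  intros HG. pose proof good_pair_phi as Gphi.
  apply (good_pair_comp (refine_error alpha G) (fun z => RtoC (Cmod z ^ 2))).
  { rewrite Cmod_0. simpl. f_equal. ring. }
  apply (good_pair_binop phi _ Cminus). ring.
  - apply good_pair_mono with N (Z.min (- M) N); auto; lia.
  - apply good_pair_sumC. lia. intros a Ha.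
    apply good_pair_scal. apply good_pair_mono with (Z.max N RG - 1)%Z (Z.min (- M) N - 1)%Z; try lia.
    apply good_pair_dilate_sub.
    + apply good_pair_mono with N (Z.min (- M) N); auto; lia.
    + apply ball_mono with RG; auto. lia.
Qed.

(* A nonzero defect at [x0] persists on a ball of fixed radius around [x0], which bounds every
   [L^2] error from below. *)
Lemma refinable_refinement_eq : refinable phi -> exists h : nat -> C, forall x, phi x = refine_sum h x.
Proof.
  intros [alpha Hal]. exists (fun k => alpha (grid k)). intros x0. apply NNPP. intros Hne.
  assert (Hx0 : ball_p N (zeroQp p) x0).
  { apply NNPP. intros Hout. apply Hne, refinement_eq_outside, Hout. }
  set (D := (phi x0 - refine_sum (fun k => alpha (grid k)) x0)%C).
  assert (HD0 : D <> 0%C).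
  { intros E. apply Hne. apply (f_equal (fun z => z + refine_sum (fun k => alpha (grid k)) x0)%C) in E.
    unfold D in E. rewrite Cplus_0_l in E. rewrite <- E. ring. }
  set (c := pw p (Z.min (- M) N - 1) * Cmod D ^ 2).
  assert (Hc : 0 < c).
  { unfold c. apply Rmult_lt_0_compat. apply pw_pos. apply pow_lt. apply Cmod_gt_0. auto. }
  destruct (Hal (sqrt c) (sqrt_lt_R0 c Hc)) as [F [_ [HF HFG]]].
  destruct (Ip_list_extend F HF) as [Fr [HG [Hincl HFr]]].
  assert (HIp : forall a, In a (grid_list ++ Fr) -> in_Ip a).
  { intros a Ha. apply in_app_or in Ha as [Ha|Ha].
    - apply in_grid_list in Ha as [k [Hk ->]]. apply grid_in_Ip; auto.
    - apply HFr; auto. }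
  specialize (HFG _ HG HIp Hincl).
  change (l2norm (refine_error alpha (grid_list ++ Fr)) < sqrt c) in HFG.
  destruct (list_in_ball (grid_list ++ Fr)) as [RG HRG].
  pose proof (l2norm_ge_point _ _ _ x0 (good_pair_refine_error alpha _ RG HRG)) as Hge.
  rewrite refine_error_on_ball in Hge by (auto; intros a Ha; apply HFr; auto).
  fold D in Hge. assert (Hb : ball_p (Z.max N RG) (zeroQp p) x0) by (apply ball_mono with N; auto; lia).
  specialize (Hge Hb). fold c in Hge. lra.
Qed.

Lemma chi_mulQp_locally_const (u : Qp p) A x y : ball_p A (zeroQp p) u -> ball_p (- A) y x ->
  chi (mulQp u x) = chi (mulQp u y).
Proof.
  intros Hu Hxy. replace (mulQp u x) with (addQp (mulQp u y) (mulQp u (subQp x y))) by ring.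
  rewrite chi_addQp. rewrite (chi_ball0 (mulQp u (subQp x y))). ring.
  replace 0%Z with (A + - A)%Z by lia. apply ball_mul. exact Hu. apply (proj1 (ball_shift (- A) y x)). exact Hxy.
Qed.

Lemma good_pair_chi_phi (eta : Qp p) :
  good_pair (fun x => (chi (mulQp eta x) * phi x)%C) (N, Z.min (Z.min (- M) N) (lowb eta)).
Proof.
  apply good_pair_mul_locally_const. apply good_pair_phi. intros x y H. apply chi_mulQp_locally_const with (- lowb eta)%Z.
  apply ball_lowb. replace (- - lowb eta)%Z with (lowb eta) by lia. auto.
Qed.

Lemma mulQp_dilate_sub_split (eta x a : Qp p) :
  mulQp eta x = addQp (mulQp (mulQp (ofZp p 1 1) eta) (subQp (dilate x) a)) (mulQp (mulQp (ofZp p 1 1) eta) a).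
Proof.
  unfold dilate. transitivity (mulQp (mulQp (ofZp p 1 1) (ofZp p 1 (-1))) (mulQp eta x)).
  rewrite ofZp_mul. change (ofZp p (1 * 1) (1 + -1)) with oneQp. ring. ring.
Qed.

Lemma integrable_chi_phi_dilate_sub (eta a : Qp p) : ball_p (N + 1) (zeroQp p) a ->
  integrable (fun x => (chi (mulQp eta x) * phi (subQp (dilate x) a))%C).
Proof.
  intros Ha. exists N, (Z.min (Z.min (- M) N - 1) (lowb eta)).
  apply good_pair_mul_locally_const.
  - replace N with (N + 1 - 1)%Z at 1 by lia. apply good_pair_dilate_sub; auto.
    apply good_pair_mono with N (Z.min (- M) N); auto using good_pair_phi; lia.
  - intros x y H. apply chi_mulQp_locally_const with (- lowb eta)%Z. apply ball_lowb.
    replace (- - lowb eta)%Z with (lowb eta) by lia. auto.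
Qed.

(* The substitution [y = x/p - a] turns [chi (eta x)] into [chi (p eta a) chi (p eta y)]. *)
Lemma integral_chi_phi_dilate_sub (eta a : Qp p) : ball_p (N + 1) (zeroQp p) a ->
  integral (fun x => (chi (mulQp eta x) * phi (subQp (dilate x) a))%C) =
  (RtoC (/ P) * chi (mulQp (mulQp (ofZp p 1 1) eta) a) * ft phi (mulQp (ofZp p 1 1) eta))%C.
Proof.
  intros Ha. set (eta' := mulQp (ofZp p 1 1) eta).
  set (F := fun y => (chi (mulQp eta' a) * (chi (mulQp eta' y) * phi y))%C).
  transitivity (integral (fun x => F (subQp (dilate x) a))).
  { f_equal. apply functional_extensionality. intros x. unfold F.
    rewrite (mulQp_dilate_sub_split eta x a). fold eta'. rewrite chi_addQp. ring. }
  rewrite (integral_dilate_sub F (N + 1) (Z.min (Z.min (- M) N) (lowb eta'))); auto; unfold F.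
  - unfold ft. rewrite integral_scal. ring. exists N, (Z.min (Z.min (- M) N) (lowb eta')). apply good_pair_chi_phi.
  - apply good_pair_scal. apply good_pair_mono with N (Z.min (Z.min (- M) N) (lowb eta')). apply good_pair_chi_phi. lia. lia.
Qed.

Lemma mulQp_ofZp_grid (eta : Qp p) k :
  mulQp (ofZp p (Z.of_nat k) 0) (mulQp eta (ofZp p 1 (- N))) = mulQp (mulQp (ofZp p 1 1) eta) (grid k).
Proof.
  unfold grid. transitivity (mulQp eta (mulQp (ofZp p (Z.of_nat k) 0) (ofZp p 1 (- N)))). ring.
  transitivity (mulQp eta (mulQp (ofZp p 1 1) (ofZp p (Z.of_nat k) (- (N + 1))))). 2: ring.
  rewrite !ofZp_mul. f_equal. f_equal; lia.
Qed.

Lemma ft_two_scale (h : nat -> C) (Hh : forall x, phi x = refine_sum h x) (eta : Qp p) :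
  ft phi eta = (m0 p N h (mulQp eta (ofZp p 1 (- N))) * ft phi (mulQp (ofZp p 1 1) eta))%C.
Proof.
  unfold ft at 1.
  transitivity (integral (fun x => sumC (map (fun k => (h k * (chi (mulQp eta x) *
                  phi (subQp (dilate x) (grid k)))))%C (seq 0 (ncoef p N))))).
  { f_equal. apply functional_extensionality. intros x. rewrite Hh. unfold refine_sum.
    rewrite sumC_map_scal. f_equal. apply map_ext. intros k. ring. }
  rewrite integral_sum.
  2:{ intros k _. destruct (integrable_chi_phi_dilate_sub eta (grid k) (ball_grid k)) as [R [l G]].
      exists R, l. apply good_pair_scal, G. }
  unfold m0. rewrite sumC_map_scal, Cmult_comm, sumC_map_scal. f_equal. apply map_ext. intros k.
  rewrite integral_scal by apply integrable_chi_phi_dilate_sub, ball_grid.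
  rewrite integral_chi_phi_dilate_sub, mulQp_ofZp_grid by apply ball_grid. ring.
Qed.

Lemma ft_prod_iter (h : nat -> C) (Hh : forall x, phi x = refine_sum h x) (xi : Qp p) n :
  ft phi xi = (prodC n (fun j => m0 p N h (mulQp xi (ofZp p 1 (Z.of_nat j - N)))) *
               ft phi (mulQp xi (ofZp p 1 (Z.of_nat n))))%C.
Proof.
  induction n.
  - simpl. unfold prodC. simpl. replace (mulQp xi (ofZp p 1 0)) with xi. ring.
    change (ofZp p 1 0) with oneQp. ring.
  - rewrite IHn, prodC_S, (ft_two_scale h Hh).
    replace (mulQp (mulQp xi (ofZp p 1 (Z.of_nat n))) (ofZp p 1 (- N))) with (mulQp xi (ofZp p 1 (Z.of_nat n - N))).
    replace (mulQp (ofZp p 1 1) (mulQp xi (ofZp p 1 (Z.of_nat n)))) with (mulQp xi (ofZp p 1 (Z.of_nat (S n)))).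
    ring.
    + transitivity (mulQp xi (mulQp (ofZp p 1 1) (ofZp p 1 (Z.of_nat n)))). rewrite ofZp_mul. f_equal. f_equal. lia. ring.
    + transitivity (mulQp xi (mulQp (ofZp p 1 (Z.of_nat n)) (ofZp p 1 (- N)))). rewrite ofZp_mul. f_equal. ring.
Qed.

Lemma ft_eventually_ft0 (xi : Qp p) n : (- lowb xi + N <= Z.of_nat n)%Z ->
  ft phi (mulQp xi (ofZp p 1 (Z.of_nat n))) = ft phi (zeroQp p).
Proof.
  intros Hn. unfold ft. f_equal. apply functional_extensionality. intros x.
  replace (mulQp (zeroQp p) x) with (zeroQp p) by ring.
  rewrite (chi_ball0 (zeroQp p)). 2: apply ball0_iff, trunc_zeroQp.
  destruct (classic (phi x = 0%C)) as [E|E]. rewrite E. ring.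
  rewrite chi_ball0. ring. apply ball_mono with ((- lowb xi + - Z.of_nat n) + N)%Z. lia.
  apply ball_mul. apply ball_mul. apply ball_lowb. apply ball0_ofZp. lia. apply phi_support; auto.
Qed.

Lemma ft_infinite_product (h : nat -> C) (Hh : forall x, phi x = refine_sum h x) (xi : Qp p) :
  filterlim (fun n : nat => (ft phi (zeroQp p) *
                    prodC n (fun j => m0 p N h (mulQp xi (ofZp p 1 (Z.of_nat j - N)))))%C)
                 eventually (locally (ft phi xi)).
Proof.
  apply (filterlim_ext_loc (fun _ => ft phi xi)).
  - exists (Z.to_nat (- lowb xi + N)). intros n Hn.
    rewrite (ft_prod_iter h Hh xi n), ft_eventually_ft0. ring. lia.
  - apply filterlim_const.
Qed.

End TestFunction.

End Qp_analysis.

Theorem corollary3 (p : positive) (M N : Z) (phi : Qp p -> C) :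
  prime (Zpos p) -> (0 <= N)%Z ->
  in_D p N M phi -> refinable phi -> ft phi (zeroQp p) <> 0%C ->
  exists h : nat -> C,
    (forall x : Qp p,
       phi x = sumC (map (fun k => (h k *
         phi (subQp (mulQp (ofZp p 1 (-1)) x) (ofZp p (Z.of_nat k) (- (N + 1)))))%C)
         (seq 0 (ncoef p N)))) /\
    (forall xi : Qp p,
       filterlim (fun n : nat => (ft phi (zeroQp p) *
                    prodC n (fun j => m0 p N h (mulQp xi (ofZp p 1 (Z.of_nat j - N)))))%C)
                 eventually (locally (ft phi xi))).
Proof.
  intros Hprime HN HD Href _.
  assert (hp : (1 < Zpos p)%Z) by apply Hprime.
  destruct (refinable_refinement_eq p hp N M phi HN HD Href) as [h Hh].
  exists h. split.
  - exact Hh.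
  - exact (ft_infinite_product p hp N M phi HD h Hh).
Qed.
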